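(* Let $\Gamma_1$ be a represented pointclass satisfying the standing assumptions, containing the closed sets and (uniformly computably) closed under finite unions and under the operation $(A_n)_{n\in\mathbb{N}}\mapsto\{0^\mathbb{N}\}\cup\bigcup_{n\in\mathbb{N}}0^n1A_n$. Let $\Gamma=\Gamma_1\cup\overline{\Gamma_1}$ (the closure under complements), also satisfying the standing assumptions. Then $\widehat{\mathrm{Win}_{\Gamma_1}}\leq_W\mathrm{SPE}_\Gamma$.
   Context: $f\leq_W g$ iff there are computable partial $K,H$ on $\mathbb{N}^\mathbb{N}$ such that for every realizer $G$ of $g$, $p\mapsto K(\langle p,G(H(p))\rangle)$ realizes $f$. $\widehat{f}(x_0,x_1,\ldots)=(f(x_0),f(x_1),\ldots)$. $\overline{\Delta}=\{U^C\mid U\in\Delta\}$; $wA=\{wp\mid p\in A\}$. Games: infinite sequential games with choices $\{0,1\}$, players, turn function $d:\{0,1\}^*\to A$, outcomes $O$, valuation $v$, preferences with well-founded inverses; strategy profiles $s:\{0,1\}^*\to\{0,1\}$; play induced from history $\lambda$: $p_n=\lambda_n$ for $n<|\lambda|$, else $p_n=s(p_{<n})$. Nash equilibrium: no player can unilaterally switch strategy to get a strictly preferred outcome; subgame perfect: Nash equilibrium of the game started at every history. Named by numbers of players/outcomes, $d$ and preferences as tables, and for each player $a$ and upper set $U$ w.r.t. $\prec_a$ a $\Gamma$-name of $v^{-1}(U)$. Win/lose games: two players, outcomes $w_1,w_2$, player $i$ prefers $w_i$. $\mathrm{Win}_\Delta$: input a win/lose game with player-1 winning set given by a $\Delta$-name;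 output which player has a winning strategy. $\mathrm{SPE}_\Gamma$: input a two-player game with finitely many outcomes and antagonistic linear preferences; output a subgame perfect equilibrium. Standing assumptions on a pointclass: its win/lose games are determined; contains $\emptyset,\{0,1\}^\mathbb{N}$; uniformly computable closure under rescaling and its inverse and intersection with clopens. *)

From Stdlib Require Import Arith List Cantor.
Import ListNotations.

Definition Baire := nat -> nat.
Definition Cantor := nat -> bool.

Definition prefix {A} (x : nat -> A) (k : nat) : list A := map x (seq 0 k).
Fixpoint lcode (l : list nat) : nat :=
  match l with [] => 0 | a :: l' => S (to_nat (a, lcode l')) end.
Definition wcode (w : list bool) : nat := lcode (map Nat.b2n w).

Definition pairB (p q : Baire) : Baire :=
  fun n => if Nat.even n then p (Nat.div2 n) else q (Nat.div2 n).
Definition tupleB (ps : nat -> Baire) : Baire :=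
  fun m => let (i, j) := of_nat m in ps i j.
Definition projB (i : nat) (p : Baire) : Baire := fun j => p (to_nat (i, j)).
Definition cst (c : nat) : Baire := fun _ => c.
Definition tl (p : Baire) : Baire := fun n => p (S n).

Inductive prf : Type :=
| PZero | PSucc | PId | PFst | PSnd
| PPair (f g : prf) | PComp (f g : prf) | PRec (f g : prf) | PMu (f : prf).

Inductive eval : prf -> nat -> nat -> Prop :=
| eZero x : eval PZero x 0
| eSucc x : eval PSucc x (S x)
| eId x : eval PId x x
| eFst x : eval PFst x (fst (of_nat x))
| eSnd x : eval PSnd x (snd (of_nat x))
| ePair f g x y z : eval f x y -> eval g x z -> eval (PPair f g) x (to_nat (y, z))
| eComp f g x y z : eval g x y -> eval f y z -> eval (PComp f g) x z
| eRec0 f g x a y : of_nat x = (a, 0) -> eval f a y -> eval (PRec f g) x y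
| eRecS f g x a n z y : of_nat x = (a, S n) ->
    eval (PRec f g) (to_nat (a, n)) z ->
    eval g (to_nat (a, to_nat (n, z))) y -> eval (PRec f g) x y
| eMu f x n : eval f (to_nat (x, n)) 0 ->
    (forall m, m < n -> exists k, eval f (to_nat (x, m)) (S k)) ->
    eval (PMu f) x n.

(** Oracle machine [e] on oracle [p] produces output [q]: to compute [q n] it
    queries [e] on [(n, p|k)] for k = 0,1,2,...; answer 0 means "read more",
    answer [S m] means output [m]. *)
Definition computes (e : prf) (p q : Baire) : Prop :=
  forall n, exists k,
    eval e (to_nat (n, lcode (prefix p k))) (S (q n)) /\
    forall j, j < k -> eval e (to_nat (n, lcode (prefix p j))) 0.

Definition computable (F : Baire -> option Baire) : Prop :=
  exists e, forall p q, F p = Some q -> computes e p q.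

Definition realizes {X Y : Type} (dX : Baire -> X -> Prop) (dY : Baire -> Y -> Prop)
  (f : X -> Y -> Prop) (F : Baire -> option Baire) : Prop :=
  forall p x, dX p x -> (exists y, f x y) ->
    exists q, F p = Some q /\ exists y, dY q y /\ f x y.

Definition wcomp (K H G : Baire -> option Baire) (p : Baire) : option Baire :=
  match H p with
  | Some r => match G r with Some s => K (pairB p s) | None => None end
  | None => None
  end.

Definition Wred {X Y X' Y' : Type}
  (dX : Baire -> X -> Prop) (dY : Baire -> Y -> Prop) (f : X -> Y -> Prop)
  (dX' : Baire -> X' -> Prop) (dY' : Baire -> Y' -> Prop) (g : X' -> Y' -> Prop) : Prop :=
  exists K H, computable K /\ computable H /\
    forall G, realizes dX' dY' g G -> realizes dX dY f (wcomp K H G).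

Definition hat_rep {X : Type} (dX : Baire -> X -> Prop) : Baire -> (nat -> X) -> Prop :=
  fun p xs => forall i, dX (projB i p) (xs i).
Definition hat {X Y : Type} (f : X -> Y -> Prop) : (nat -> X) -> (nat -> Y) -> Prop :=
  fun xs ys => forall i, f (xs i) (ys i).

Inductive player := P1 | P2.
Definition player_code (a : player) : nat := match a with P1 => 0 | P2 => 1 end.

Fixpoint playpre (s : list bool -> bool) (h : list bool) (n : nat) : list bool :=
  match n with
  | 0 => []
  | S m => let l := playpre s h m in
           l ++ [if m <? length h then nth m h false else s l]
  end.
Definition play (s : list bool -> bool) (h : list bool) : Cantor :=
  fun n => nth n (playpre s h (S n)) false.

Definition has_win (d : list bool -> player) (A : Cantor -> Prop) (a : player) : Prop :=
  exists sigma : list bool -> bool, forall s : list bool -> bool,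
    (forall w, d w = a -> s w = sigma w) ->
    match a with P1 => A (play s []) | P2 => ~ A (play s []) end.

(** Two-player games with finitely many outcomes [0..nout-1];
    [g_pref a o o' = true] means player [a] strictly prefers [o'] to [o]. *)
Record game2 := {
  g_nout : nat;
  g_turn : list bool -> player;
  g_val : Cantor -> nat;
  g_val_lt : forall x, g_val x < g_nout;
  g_pref : player -> nat -> nat -> bool }.

Definition antag_linear (G : game2) : Prop :=
  (forall o, o < g_nout G -> g_pref G P1 o o = false) /\
  (forall o1 o2 o3, o1 < g_nout G -> o2 < g_nout G -> o3 < g_nout G ->
      g_pref G P1 o1 o2 = true -> g_pref G P1 o2 o3 = true -> g_pref G P1 o1 o3 = true) /\
  (forall o1 o2, o1 < g_nout G -> o2 < g_nout G -> o1 <> o2 ->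
      g_pref G P1 o1 o2 = true \/ g_pref G P1 o2 o1 = true) /\
  (forall o1 o2, o1 < g_nout G -> o2 < g_nout G ->
      g_pref G P2 o1 o2 = g_pref G P1 o2 o1).

Definition is_NE (G : game2) (s : list bool -> bool) (h : list bool) : Prop :=
  forall (a : player) (s' : list bool -> bool),
    (forall w, g_turn G w <> a -> s' w = s w) ->
    g_pref G a (g_val G (play s h)) (g_val G (play s' h)) = false.

Definition is_SPE (G : game2) (s : list bool -> bool) : Prop :=
  forall h, is_NE G s h.

Definition upper_set (G : game2) (a : player) (U : nat -> Prop) : Prop :=
  (forall o, U o -> o < g_nout G) /\
  (forall o o', U o -> o' < g_nout G -> g_pref G a o o' = true -> U o').

Definition pcrep := Baire -> (Cantor -> Prop) -> Prop.

Definition rep_functional (nm : pcrep) : Prop :=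
  forall p A B, nm p A -> nm p B -> A = B.

Definition prepend (w : list bool) (x : Cantor) : Cantor :=
  fun n => if n <? length w then nth n w false else x (n - length w).
Definition has_prefix (w : list bool) (x : Cantor) : Prop := prefix x (length w) = w.
Definition rescale (w : list bool) (A : Cantor -> Prop) : Cantor -> Prop :=
  fun x => has_prefix w x /\ A (fun n => x (length w + n)).
Definition unrescale (w : list bool) (A : Cantor -> Prop) : Cantor -> Prop :=
  fun x => A (prepend w x).
Definition clopen (l : list (list bool)) : Cantor -> Prop :=
  fun x => exists w, In w l /\ has_prefix w x.
Definition lwcode (l : list (list bool)) : nat := lcode (map wcode l).

Definition standing (nm : pcrep) : Prop :=
  (forall d A p, nm p A -> has_win d A P1 \/ has_win d A P2) /\
  (exists p, nm p (fun _ => False)) /\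
  (exists p, nm p (fun _ => True)) /\
  (exists e, forall w p A, nm p A ->
     exists q, computes e (pairB (cst (wcode w)) p) q /\ nm q (rescale w A)) /\
  (exists e, forall w p A, nm p A ->
     exists q, computes e (pairB (cst (wcode w)) p) q /\ nm q (unrescale w A)) /\
  (exists e, forall l p A, nm p A ->
     exists q, computes e (pairB (cst (lwcode l)) p) q /\
               nm q (fun x => A x /\ clopen l x)).

(** names of closed subsets of Cantor space: sets of paths of a tree given by
    its characteristic function (0 = in the tree) *)
Definition closed_name (p : Baire) (A : Cantor -> Prop) : Prop :=
  forall x, A x <-> forall k, p (wcode (prefix x k)) = 0.

Definition contains_closed (nm : pcrep) : Prop :=
  exists e, forall p A, closed_name p A -> exists q, computes e p q /\ nm q A.

Definition closed_union (nm : pcrep) : Prop :=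
  exists e, forall p q A B, nm p A -> nm q B ->
    exists r, computes e (pairB p q) r /\ nm r (fun x => A x \/ B x).

Definition zero_op (As : nat -> Cantor -> Prop) : Cantor -> Prop :=
  fun x => (forall k, x k = false) \/
           exists n, (forall k, k < n -> x k = false) /\ x n = true /\
                     As n (fun m => x (S n + m)).

Definition closed_zero_op (nm : pcrep) : Prop :=
  exists e, forall (ps : nat -> Baire) (As : nat -> Cantor -> Prop),
    (forall n, nm (ps n) (As n)) ->
    exists r, computes e (tupleB ps) r /\ nm r (zero_op As).

(** Gamma_1 u complements(Gamma_1): a bit selecting whether the rest names the
    set or its complement *)
Definition compl_closure (nm : pcrep) : pcrep :=
  fun p A => (p 0 = 0 /\ nm (tl p) A) \/
             (p 0 = 1 /\ exists B, nm (tl p) B /\ forall x, A x <-> ~ B x).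

Definition win_rep (nm : pcrep) : Baire -> (list bool -> player) * (Cantor -> Prop) -> Prop :=
  fun p dA => (forall w, projB 0 p (wcode w) = player_code (fst dA w)) /\
              nm (projB 1 p) (snd dA).
Definition pl_rep : Baire -> player -> Prop := fun q a => q 0 = player_code a.
Definition Win (dA : (list bool -> player) * (Cantor -> Prop)) (a : player) : Prop :=
  has_win (fst dA) (snd dA) a.

Definition game_rep (nm : pcrep) : Baire -> game2 -> Prop :=
  fun p G =>
    projB 0 p 0 = 2 /\ projB 0 p 1 = g_nout G /\
    (forall w, projB 1 p (wcode w) = player_code (g_turn G w)) /\
    (forall a o o', o < g_nout G -> o' < g_nout G ->
       projB 2 p (to_nat (player_code a, to_nat (o, o'))) =
       (if g_pref G a o o' then 1 else 0)) /\
    (forall a u, u < 2 ^ g_nout G ->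
       upper_set G a (fun o => Nat.testbit u o = true) ->
       nm (projB (to_nat (player_code a, u)) (projB 3 p))
          (fun x => Nat.testbit u (g_val G x) = true)).
Definition strat_rep : Baire -> (list bool -> bool) -> Prop :=
  fun q s => forall w, q (wcode w) = (if s w then 1 else 0).
Definition SPE (G : game2) (s : list bool -> bool) : Prop :=
  antag_linear G /\ is_SPE G s.

From Pilot Require Import Defs.
From Stdlib Require Import Arith List Cantor Lia Classical ClassicalEpsilon IndefiniteDescription
  FunctionalExtensionality PropExtensionality.
Import ListNotations.

(** Given win/lose games [(d_n, A_n)], player 1 wins game [n] iff every subgame
    perfect equilibrium of the following three-outcome game moves [1] at the
    history [0^n 1].  Player 1 alone moves until it plays [1]; playing [0]
    forever gives outcome 2.
    After [0^n 1], player 1 either declines with [0] (outcome 1) or enters with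
    [1], after which game [n] is played and yields 2 inside [A_n] and 0 outside.
    Player 1 prefers larger outcomes, player 2 smaller ones.  Entering is worth
    2 or 0 according to who wins game [n] (the equilibrium is a Nash
    equilibrium of the subgame too), and declining is worth 1.  An equilibrium
    exists because each player has a strategy winning from every position of
    game [n] from which it can win at all (determinacy applied to all
    positions).  The sets of plays with outcome [>= 2] and [>= 1] are
    [{0^w} u U_n 0^n 1 1 A_n] and [{0^w} u U_n 0^n 1 (0 2^w u 1 A_n)], so
    they are in [Gamma_1] uniformly in the names of the [A_n]; every upper set
    of outcomes of either player is one of these, [{}], everything, or a
    complement of one of them. *)

Lemma eval_PRec_deterministic f g :
  (forall x y1 y2, eval f x y1 -> eval f x y2 -> y1 = y2) ->
  (forall x y1 y2, eval g x y1 -> eval g x y2 -> y1 = y2) ->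
  forall n x a, of_nat x = (a, n) -> forall y1 y2,
  eval (PRec f g) x y1 -> eval (PRec f g) x y2 -> y1 = y2.
Proof.
  intros Hf Hg n. induction n as [|n IH]; intros x a Hx y1 y2 H1 H2.
  - inversion H1 as [| | | | | | | f' g' x' a1 y' E1 F1 | f' g' x' a1 n1 z1 y' E1 | ]; subst; [|congruence].
    inversion H2 as [| | | | | | | f'' g'' x'' a2 y'' E2 F2 | f'' g'' x'' a2 n2 z2 y'' E2 | ]; subst; [|congruence].
    rewrite Hx in E1, E2. injection E1 as <-. injection E2 as <-. eauto.
  - inversion H1 as [| | | | | | | f' g' x' a1 y' E1 F1 | f' g' x' a1 n1 z1 y' E1 R1 G1 | ]; subst; [congruence|].
    inversion H2 as [| | | | | | | f'' g'' x'' a2 y'' E2 F2 | f'' g'' x'' a2 n2 z2 y'' E2 R2 G2| ]; subst; [congruence|].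
    rewrite Hx in E1, E2. injection E1 as <- <-. injection E2 as <- <-.
    assert (z1 = z2) by (eapply IH; [apply cancel_of_to|eassumption|eassumption]).
    subst. eauto.
Qed.

Lemma eval_deterministic e x y1 y2 : eval e x y1 -> eval e x y2 -> y1 = y2.
Proof.
  revert x y1 y2. induction e; intros x y1 y2 H1 H2.
  1-5: inversion H1; inversion H2; subst; auto.
  - inversion H1; inversion H2; subst.
    assert (y = y0) by (eapply IHe1; eassumption). assert (z = z0) by (eapply IHe2; eassumption).
    subst; reflexivity.
  - inversion H1; inversion H2; subst.
    assert (y = y0) by (eapply IHe2; eassumption). subst. eapply IHe1; eassumption.
  - destruct (of_nat x) as [a n] eqn:E. eapply (eval_PRec_deterministic e1 e2 IHe1 IHe2 n x a E); eauto.
  - inversion H1; inversion H2; subst.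
    destruct (Nat.lt_trichotomy y1 y2) as [Hl|[Hl|Hl]]; auto.
    + destruct (H8 _ Hl) as [k Hk]. specialize (IHe _ _ _ H0 Hk). discriminate.
    + destruct (H3 _ Hl) as [k Hk]. specialize (IHe _ _ _ H7 Hk). discriminate.
Qed.

Lemma computes_deterministic e p q1 q2 : computes e p q1 -> computes e p q2 -> forall n, q1 n = q2 n.
Proof.
  intros H1 H2 n. destruct (H1 n) as [k1 [A1 B1]]. destruct (H2 n) as [k2 [A2 B2]].
  destruct (Nat.lt_trichotomy k1 k2) as [Hl|[Hl|Hl]].
  - specialize (B2 _ Hl). pose proof (eval_deterministic _ _ _ _ A1 B2). discriminate.
  - subst. pose proof (eval_deterministic _ _ _ _ A1 A2). congruence.
  - specialize (B1 _ Hl). pose proof (eval_deterministic _ _ _ _ A2 B1). discriminate.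
Qed.

Lemma nat_pair_ind (P : nat -> Prop) : (forall a b, P (to_nat (a, b))) -> forall x, P x.
Proof. intros H x. rewrite <- (cancel_to_of x). destruct (of_nat x). apply H. Qed.

Ltac pair_cases x :=
  pattern x; apply nat_pair_ind; clear x; intros ?a ?b; rewrite ?cancel_of_to; cbn beta iota.

Ltac simpof := repeat (progress (rewrite ?cancel_of_to; cbn [fst snd])).

Lemma eval_out e x y y' : eval e x y -> y = y' -> eval e x y'.
Proof. intros H <-; exact H. Qed.

Lemma eval_in e x x' y : eval e x' y -> x = x' -> eval e x y.
Proof. intros H ->; exact H. Qed.

Lemma eval_PRec_iter f g a n (ys : nat -> nat) :
  eval f a (ys 0) ->
  (forall m, m < n -> eval g (to_nat (a, to_nat (m, ys m))) (ys (S m))) ->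
  eval (PRec f g) (to_nat (a, n)) (ys n).
Proof.
  intros H0 HS. induction n as [|n IH].
  - eapply eRec0; [apply cancel_of_to|auto].
  - eapply eRecS; [apply cancel_of_to| |].
    + apply IH. intros; apply HS; lia.
    + apply HS; lia.
Qed.

Lemma eval_fst a b : eval PFst (to_nat (a, b)) a.
Proof. eapply eval_out; [constructor|]. simpof. reflexivity. Qed.
Lemma eval_snd a b : eval PSnd (to_nat (a, b)) b.
Proof. eapply eval_out; [constructor|]. simpof. reflexivity. Qed.
Lemma eval_snd2 a m z : eval (PComp PSnd PSnd) (to_nat (a, to_nat (m, z))) z.
Proof. eapply eval_out; [econstructor; constructor|]. simpof. reflexivity. Qed.
Lemma eval_fst2 a m z : eval (PComp PFst PSnd) (to_nat (a, to_nat (m, z))) m.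
Proof. eapply eval_out; [econstructor; constructor|]. simpof. reflexivity. Qed.

Definition total (e : prf) (f : nat -> nat) := forall x, eval e x (f x).

Lemma total_ext e f g : total e f -> (forall x, f x = g x) -> total e g.
Proof. intros H E x. rewrite <- E. apply H. Qed.

Lemma total_zero : total PZero (fun _ => 0). Proof. intro; constructor. Qed.
Lemma total_succ : total PSucc S. Proof. intro; constructor. Qed.
Lemma total_id : total PId (fun x => x). Proof. intro; constructor. Qed.
Lemma total_fst : total PFst (fun x => fst (of_nat x)). Proof. intro; constructor. Qed.
Lemma total_snd : total PSnd (fun x => snd (of_nat x)). Proof. intro; constructor. Qed.
Lemma total_comp f g F G : total f F -> total g G -> total (PComp f g) (fun x => F (G x)).
Proof. intros H1 H2 x. econstructor; eauto. Qed.
Lemma total_pair f g F G : total f F -> total g G -> total (PPair f g) (fun x => to_nat (F x, G x)).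
Proof. intros H1 H2 x. constructor; eauto. Qed.

Fixpoint pconst (c : nat) : prf := match c with 0 => PZero | S c => PComp PSucc (pconst c) end.
Lemma total_const c : total (pconst c) (fun _ => c).
Proof. induction c; intro x; [constructor|]. econstructor; [apply IHc|constructor]. Qed.

Definition iter_pair_fn (init step : nat -> nat) (x : nat) : nat :=
  let (a, n) := of_nat x in Nat.iter n (fun s => step (to_nat (a, s))) (init a).

Definition piter (init step : prf) : prf :=
  PRec init (PComp step (PPair PFst (PComp PSnd PSnd))).

Lemma total_iter init step FI FS :
  total init FI -> total step FS -> total (piter init step) (iter_pair_fn FI FS).
Proof.
  intros HI HS x. unfold iter_pair_fn. pair_cases x. rename a into a', b into n. rename a' into a.
  apply (eval_PRec_iter _ _ a n (fun n => Nat.iter n (fun s => FS (to_nat (a, s))) (FI a))).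
  - apply HI.
  - intros m _. econstructor; [|apply HS].
    eapply eval_out; [constructor; [constructor|econstructor; constructor]|]. simpof. reflexivity.
Qed.

Definition uncurry_pair (F : nat -> nat -> nat) (x : nat) := let (a, b) := of_nat x in F a b.

Definition padd := PRec PId (PComp PSucc (PComp PSnd PSnd)).
Lemma total_add : total padd (uncurry_pair Nat.add).
Proof.
  intro x. unfold uncurry_pair. pair_cases x. rename a into a', b into n. rename a' into a.
  apply (eval_PRec_iter _ _ a n (fun n => a + n)); [rewrite Nat.add_0_r; constructor|].
  intros m _. econstructor; [apply eval_snd2|].
  replace (a + S m) with (S (a + m)) by lia. constructor.
Qed.

Definition ppred := PComp (PRec PZero (PComp PFst PSnd)) (PPair PZero PId).
Lemma total_pred : total ppred Nat.pred.
Proof.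
  intro x. econstructor; [constructor; constructor|].
  apply (eval_PRec_iter _ _ 0 x Nat.pred); [constructor|].
  intros m _. apply eval_fst2.
Qed.

Definition psub := PRec PId (PComp ppred (PComp PSnd PSnd)).
Lemma total_sub : total psub (uncurry_pair Nat.sub).
Proof.
  intro x. unfold uncurry_pair. pair_cases x. rename a into a', b into n. rename a' into a.
  apply (eval_PRec_iter _ _ a n (fun n => a - n)); [rewrite Nat.sub_0_r; constructor|].
  intros m _. econstructor; [apply eval_snd2|].
  replace (a - S m) with (Nat.pred (a - m)) by lia. apply total_pred.
Qed.

Definition ifz (a b c : nat) := match c with 0 => a | _ => b end.

Definition pifz := PRec PFst (PComp PSnd PFst).
Lemma total_ifz : total pifz (fun x => let (ab, c) := of_nat x in let (a, b) := of_nat ab in ifz a b c).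
Proof.
  intro x. pair_cases x. rename a into ab, b into c. pair_cases ab.
  apply (eval_PRec_iter _ _ (to_nat (a, b)) c (fun c => ifz a b c)).
  - apply eval_fst.
  - intros m _. econstructor; [apply eval_fst|]. apply eval_snd.
Qed.

Record Prog := { code : prf; fn : nat -> nat; code_ok : total code fn }.

Definition Pzero : Prog := {| code := PZero; fn := fun _ => 0; code_ok := total_zero |}.
Definition Pconst c : Prog := {| code := pconst c; fn := fun _ => c; code_ok := total_const c |}.
Definition Pid : Prog := {| code := PId; fn := fun x => x; code_ok := total_id |}.
Definition Pfst : Prog := {| code := PFst; fn := fun x => fst (of_nat x); code_ok := total_fst |}.
Definition Psnd : Prog := {| code := PSnd; fn := fun x => snd (of_nat x); code_ok := total_snd |}.
Definition Pcomp (p q : Prog) : Prog :=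
  {| code := PComp (code p) (code q); fn := fun x => fn p (fn q x);
     code_ok := total_comp _ _ _ _ (code_ok p) (code_ok q) |}.
Definition Ppair (p q : Prog) : Prog :=
  {| code := PPair (code p) (code q); fn := fun x => to_nat (fn p x, fn q x);
     code_ok := total_pair _ _ _ _ (code_ok p) (code_ok q) |}.
Definition Psucc_of (p : Prog) : Prog :=
  {| code := PComp PSucc (code p); fn := fun x => S (fn p x);
     code_ok := total_comp _ _ _ _ total_succ (code_ok p) |}.
Definition Ppred p : Prog :=
  {| code := PComp ppred (code p); fn := fun x => Nat.pred (fn p x);
     code_ok := total_comp _ _ _ _ total_pred (code_ok p) |}.
Definition Piter (init step : Prog) : Prog :=
  {| code := piter (code init) (code step); fn := iter_pair_fn (fn init) (fn step);
     code_ok := total_iter _ _ _ _ (code_ok init) (code_ok step) |}.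
Definition Pext (p : Prog) (f : nat -> nat) (H : forall x, fn p x = f x) : Prog :=
  {| code := code p; fn := f; code_ok := total_ext _ _ _ (code_ok p) H |}.

Lemma Padd_ok p q : total (PComp padd (code (Ppair p q))) (fun x => fn p x + fn q x).
Proof.
  eapply total_ext; [apply total_comp; [apply total_add|apply (code_ok (Ppair p q))]|].
  intro x. cbn [fn Ppair]. unfold uncurry_pair. rewrite cancel_of_to. reflexivity.
Qed.
Definition Padd p q : Prog := {| code := _; fn := _; code_ok := Padd_ok p q |}.

Lemma Psub_ok p q : total (PComp psub (code (Ppair p q))) (fun x => fn p x - fn q x).
Proof.
  eapply total_ext; [apply total_comp; [apply total_sub|apply (code_ok (Ppair p q))]|].
  intro x. cbn [fn Ppair]. unfold uncurry_pair. rewrite cancel_of_to. reflexivity.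
Qed.
Definition Psub p q : Prog := {| code := _; fn := _; code_ok := Psub_ok p q |}.

Lemma Pifz_ok a b c :
  total (PComp pifz (code (Ppair (Ppair a b) c))) (fun x => ifz (fn a x) (fn b x) (fn c x)).
Proof.
  eapply total_ext; [apply total_comp; [apply total_ifz|apply (code_ok (Ppair (Ppair a b) c))]|].
  intro x. cbn [fn Ppair]. rewrite !cancel_of_to. reflexivity.
Qed.
Definition Pifz a b c : Prog := {| code := _; fn := _; code_ok := Pifz_ok a b c |}.

Definition Pif (c a b : Prog) := Pifz b a c.
Lemma Pif_fn c a b x : fn (Pif c a b) x = if fn c x =? 0 then fn b x else fn a x.
Proof. unfold Pif. cbn [fn Pifz]. destruct (fn c x); reflexivity. Qed.

Definition Pltb p q := Pifz Pzero (Pconst 1) (Psub q p).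
Lemma Pltb_fn p q x : fn (Pltb p q) x = Nat.b2n (fn p x <? fn q x).
Proof.
  unfold Pltb; cbn [fn Pifz Psub Pzero Pconst].
  destruct (fn p x <? fn q x) eqn:E; [apply Nat.ltb_lt in E|apply Nat.ltb_ge in E];
  destruct (fn q x - fn p x) eqn:E2; cbn; auto; lia.
Qed.

Definition Peqb p q := Pifz (Pifz (Pconst 1) Pzero (Psub q p)) Pzero (Psub p q).
Lemma Peqb_fn p q x : fn (Peqb p q) x = if fn p x =? fn q x then 1 else 0.
Proof.
  unfold Peqb; cbn [fn Pifz Psub Pzero Pconst].
  destruct (fn p x =? fn q x) eqn:E; [apply Nat.eqb_eq in E|apply Nat.eqb_neq in E].
  - rewrite E, Nat.sub_diag. reflexivity.
  - destruct (fn p x - fn q x) eqn:E2; cbn; auto. destruct (fn q x - fn p x) eqn:E3; cbn; auto; lia.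
Qed.

Lemma iter_ext {A} (f g : A -> A) n x : (forall y, f y = g y) -> Nat.iter n f x = Nat.iter n g x.
Proof. intros E; induction n; [reflexivity|]. rewrite !Nat.iter_succ, IHn, E. reflexivity. Qed.

Definition fold_back (H : nat -> nat) (a t : nat) : nat :=
  fold_right (fun m acc => H (to_nat (a, to_nat (m, acc)))) 0 (seq 0 t).

(** The loop state is [(i, acc)], counting [i] down from [t]. *)
Definition fold_back_step (H : Prog) : Prog :=
  let a := Pcomp Pfst Pfst in
  let i := Pcomp Pfst Psnd in
  let acc := Pcomp Psnd Psnd in
  Ppair (Ppred i) (Pcomp H (Ppair a (Ppair (Ppred i) acc))).

Definition Pfold_back (H : Prog) : Prog :=
  Pcomp (Pcomp Psnd (Piter (Ppair Psnd Pzero) (fold_back_step H))) (Ppair Pid Psnd).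

Lemma Pfold_back_fn H x : fn (Pfold_back H) x = let (a, t) := of_nat x in fold_back (fn H) a t.
Proof.
  pair_cases x. unfold Pfold_back. cbn [fn Pcomp Ppair Psnd Pid Piter Pzero]. simpof.
  unfold iter_pair_fn. simpof.
  assert (Loop : forall s, s <= b ->
     Nat.iter s (fun s0 => fn (fold_back_step H) (to_nat (to_nat (a, b), s0))) (to_nat (b, 0)) =
     to_nat (b - s, fold_right (fun m acc => fn H (to_nat (a, to_nat (m, acc)))) 0 (seq (b - s) s))).
  { induction s; intros Hs.
    - cbn. rewrite Nat.sub_0_r. reflexivity.
    - rewrite Nat.iter_succ, IHs by lia. unfold fold_back_step. cbn [fn Pcomp Ppair Ppred Pfst Psnd].
      simpof. f_equal. f_equal; [lia|].
      replace (b - S s) with (Nat.pred (b - s)) by lia.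
      replace (b - s) with (S (Nat.pred (b - s))) at 2 by lia. reflexivity. }
  rewrite Loop by lia. simpof. rewrite Nat.sub_diag. reflexivity.
Qed.

Definition tlc (c : nat) := match c with 0 => 0 | S x => snd (of_nat x) end.
Definition hdc (c : nat) := match c with 0 => 0 | S x => fst (of_nat x) end.

Definition Ptlc : Prog := Pext (Pifz Pzero (Pcomp Psnd (Ppred Pid)) Pid) tlc
  (fun x => match x with 0 => eq_refl | S _ => eq_refl end).
Definition Phdc : Prog := Pext (Pifz Pzero (Pcomp Pfst (Ppred Pid)) Pid) hdc
  (fun x => match x with 0 => eq_refl | S _ => eq_refl end).

Lemma tlc_lcode a l : tlc (lcode (a :: l)) = lcode l.
Proof. cbn [lcode tlc]. rewrite cancel_of_to. reflexivity. Qed.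
Lemma hdc_lcode a l : hdc (lcode (a :: l)) = a.
Proof. cbn [lcode hdc]. rewrite cancel_of_to. reflexivity. Qed.

Definition dropc (i c : nat) := Nat.iter i tlc c.

Lemma dropc_lcode i l : dropc i (lcode l) = lcode (skipn i l).
Proof.
  unfold dropc. revert l; induction i; intros l; [reflexivity|].
  rewrite Nat.iter_succ_r. destruct l; cbn [skipn].
  - replace (tlc (lcode [])) with (lcode []) by reflexivity. rewrite IHi. now destruct i.
  - rewrite tlc_lcode. apply IHi.
Qed.

Definition Pdrop : Prog :=
  Pext (Piter Pid (Pcomp Ptlc Psnd)) (fun x => let (c, i) := of_nat x in dropc i c)
  (fun x => ltac:(cbn [fn Piter Pid Pcomp Psnd Pext Ptlc]; unfold iter_pair_fn;
     destruct (of_nat x) as [c i]; unfold dropc; apply iter_ext; intro y; simpof; reflexivity)).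

Definition nthc (i c : nat) := hdc (dropc i c).
Definition Pnth : Prog := Pext (Pcomp Phdc Pdrop) (fun x => let (c, i) := of_nat x in nthc i c)
  (fun x => ltac:(cbn [fn Pcomp Pext Phdc Pdrop]; destruct (of_nat x); reflexivity)).

Lemma nthc_lcode i l : nthc i (lcode l) = nth i l 0.
Proof.
  unfold nthc. rewrite dropc_lcode. revert l; induction i; intros [|x l]; cbn [skipn nth]; auto.
  apply hdc_lcode.
Qed.

Lemma prefix_length {A} (p : nat -> A) k : length (prefix p k) = k.
Proof. unfold prefix. rewrite length_map, length_seq. reflexivity. Qed.

Lemma nth_prefix {A} (p : nat -> A) d k m : m < k -> nth m (prefix p k) d = p m.
Proof.
  intros H. unfold prefix. rewrite nth_indep with (d' := p 0) by (rewrite length_map, length_seq; auto).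
  rewrite map_nth, seq_nth by auto. reflexivity.
Qed.

Lemma prefix_S {A} (p : nat -> A) k : prefix p (S k) = prefix p k ++ [p k].
Proof. unfold prefix. rewrite seq_S, map_app. reflexivity. Qed.

Lemma prefix_ext {A} (p q : nat -> A) k : (forall m, m < k -> p m = q m) -> prefix p k = prefix q k.
Proof. intros H. unfold prefix. apply map_ext_in. intros a Ha. apply in_seq in Ha. apply H. lia. Qed.

Lemma ifz_dropc_prefix a b i (p : Baire) k :
  ifz a b (dropc i (lcode (prefix p k))) = if i <? k then b else a.
Proof.
  rewrite dropc_lcode. replace (i <? k) with (i <? length (prefix p k)) by (rewrite prefix_length; reflexivity).
  generalize (prefix p k).
  induction i; intros [|x l]; cbn [skipn length lcode ifz]; auto.
Qed.

Definition build (F : nat -> nat) (a t : nat) := lcode (map (fun m => F (to_nat (a, m))) (seq 0 t)).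

Definition Pbuild (F : Prog) : Prog :=
  Pfold_back (Psucc_of (Ppair (Pcomp F (Ppair Pfst (Pcomp Pfst Psnd))) (Pcomp Psnd Psnd))).

Lemma Pbuild_fn F x : fn (Pbuild F) x = let (a, t) := of_nat x in build (fn F) a t.
Proof.
  unfold Pbuild. rewrite Pfold_back_fn. destruct (of_nat x) as [a t]. unfold fold_back, build.
  set (Hb := fn (Psucc_of _)). enough (forall k, fold_right (fun m acc => Hb (to_nat (a, to_nat (m, acc))))
    0 (seq k t) = lcode (map (fun m => fn F (to_nat (a, m))) (seq k t))) by auto.
  induction t; intros k; [reflexivity|]. cbn [seq fold_right map lcode]. unfold Hb.
  rewrite IHt. cbn [fn Psucc_of Ppair Pcomp Pfst Psnd]. simpof. reflexivity.
Qed.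

Lemma least_witness (P : nat -> Prop) N : P N -> exists n, P n /\ forall m, m < n -> ~ P m.
Proof.
  induction N as [N IH] using (well_founded_induction lt_wf). intros HN.
  destruct (classic (exists m, m < N /\ P m)) as [[m [Hm Pm]]|Hn].
  - exact (IH m Hm Pm).
  - exists N. split; auto. intros m Hm Pm. apply Hn; eauto.
Qed.

Lemma computes_ext e p f g : computes e p f -> (forall n, f n = g n) -> computes e p g.
Proof. intros H E n. rewrite <- E. apply H. Qed.

Lemma computes_in_ext e p p' q : (forall m, p m = p' m) -> computes e p q -> computes e p' q.
Proof.
  intros E H n. destruct (H n) as [k [A B]]. exists k.
  rewrite <- (prefix_ext p p' k) by auto. split; auto.
  intros j Hj. rewrite <- (prefix_ext p p' j) by auto. auto.
Qed.

Lemma computes_modulus e p q : computes e p q -> exists Kf : nat -> nat,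
  (forall m, eval e (to_nat (m, lcode (prefix p (Kf m)))) (S (q m))) /\
  (forall m j, j < Kf m -> eval e (to_nat (m, lcode (prefix p j))) 0).
Proof.
  intros H. destruct (functional_choice _ H) as [Kf HKf]. exists Kf. split; intros; apply HKf; auto.
Qed.

Lemma computes_eval_empty e p q n : computes e p q -> exists w, eval e (to_nat (n, 0)) w.
Proof.
  intros H. destruct (H n) as [[|K] [A B]].
  - eexists; exact A.
  - exists 0. apply (B 0). lia.
Qed.

(** [Prun e2 P Sel] runs [e2] on oracles produced by [P]: on query [m], with
    [Sel m = (i, j)], it searches the least [t] such that [P] on [(i, (t, c))]
    answers [S (lcode (X_i|t))] and [e2] on [(j, X_i|t)] answers (or [P] gives
    up, answering [0], when the prefix [c] of its own oracle is too short). *)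
Section Run.
Variables e2 P : prf.
Variable Sel : Prog.

(* The input of [run_test1] is [((m, c), t)]; of [run_test2], [(((m, c), t), av)]. *)
Definition run_query1 : Prog :=
  Ppair (Pcomp Pfst (Pcomp Sel (Pcomp Pfst Pfst))) (Ppair Psnd (Pcomp Psnd Pfst)).
Definition run_test1 : prf := PPair PId (PComp P (code run_query1)).
Definition run_query2 : Prog :=
  Ppair (Pcomp Psnd (Pcomp Sel (Pcomp Pfst (Pcomp Pfst Pfst)))) (Ppred Psnd).
Definition run_test2 : prf := PPair PId (PComp e2 (code run_query2)).
Definition run_continue : Prog := Pifz Pzero (Pifz (Pconst 1) Pzero Psnd) (Pcomp Psnd Pfst).
Definition run_answer : Prog := Pifz Pzero Psnd (Pcomp Psnd Pfst).
Definition run_cond : prf := PComp (code run_continue) (PComp run_test2 run_test1).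
Definition Prun : prf :=
  PComp (code run_answer) (PComp run_test2 (PComp run_test1 (PPair PId (PMu run_cond)))).

Lemma run_chain (x t av r : nat) :
  eval P (fn run_query1 (to_nat (x, t))) av ->
  eval e2 (fn run_query2 (to_nat (to_nat (x, t), av))) r ->
  forall (F : Prog), eval (PComp (code F) (PComp run_test2 run_test1)) (to_nat (x, t))
       (fn F (to_nat (to_nat (to_nat (x, t), av), r))).
Proof.
  intros H1 H2 F. econstructor; [|apply code_ok]. econstructor.
  - constructor; [constructor|]. econstructor; [apply code_ok|exact H1].
  - constructor; [constructor|]. econstructor; [apply code_ok|exact H2].
Qed.

Lemma run_finish x n v : eval (PMu run_cond) x n ->
  eval (PComp (code run_answer) (PComp run_test2 run_test1)) (to_nat (x, n)) v -> eval Prun x v.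
Proof.
  intros Hm Hf. inversion Hf as [| | | | | |f g x0 y z Hy Hz| | |]; subst.
  inversion Hy as [| | | | | |f' g' x1 y1 z1 Hy1 Hz1| | |]; subst.
  unfold Prun. econstructor; [|exact Hz]. econstructor; [|exact Hz1].
  econstructor; [|exact Hy1]. eapply eval_out; [constructor; [constructor|exact Hm]|]. reflexivity.
Qed.

Variable p : Baire.
Variable X R : nat -> Baire.
(** [av i t k]: the prefix [p|k] suffices for [P] to produce [X_i|t]. *)
Variable av : nat -> nat -> nat -> bool.
Hypothesis HP : forall i t k, eval P (to_nat (i, to_nat (t, lcode (prefix p k))))
   (if av i t k then S (lcode (prefix (X i) t)) else 0).
Hypothesis Hmono : forall i t t' k, av i t k = true -> t' <= t -> av i t' k = true.
Hypothesis Hev : forall i t, exists k, av i t k = true.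
Hypothesis Hc : forall i, computes e2 (X i) (R i).

Section Query.
Variables m i j T : nat.
Hypothesis Eij : of_nat (fn Sel m) = (i, j).
Hypothesis HT : eval e2 (to_nat (j, lcode (prefix (X i) T))) (S (R i j)).
Hypothesis HlT : forall t, t < T -> eval e2 (to_nat (j, lcode (prefix (X i) t))) 0.
Variable k : nat.
Let x := to_nat (m, lcode (prefix p k)).

Lemma run_query1_fn t : fn run_query1 (to_nat (x, t)) = to_nat (i, to_nat (t, lcode (prefix p k))).
Proof. unfold x. cbn [fn run_query1 Ppair Pcomp Pfst Psnd]. simpof. rewrite Eij. reflexivity. Qed.

Lemma run_query2_fn t a : fn run_query2 (to_nat (to_nat (x, t), a)) = to_nat (j, Nat.pred a).
Proof. unfold x. cbn [fn run_query2 Ppair Pcomp Pfst Psnd Ppred]. simpof. rewrite Eij. reflexivity. Qed.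

Lemma run_stage t av0 r : eval P (fn run_query1 (to_nat (x, t))) av0 ->
  eval e2 (fn run_query2 (to_nat (to_nat (x, t), av0))) r ->
  eval (PComp (code run_continue) (PComp run_test2 run_test1)) (to_nat (x, t))
    (ifz 0 (ifz 1 0 r) av0) /\
  eval (PComp (code run_answer) (PComp run_test2 run_test1)) (to_nat (x, t)) (ifz 0 r av0).
Proof.
  intros H1 H2. split; (eapply eval_out; [apply (run_chain _ _ _ _ H1 H2)|]);
    cbn [fn run_continue run_answer Pifz Pzero Pconst Pcomp Psnd Pfst]; simpof; reflexivity.
Qed.

Lemma run_stage_pending t : av i t k = false ->
  eval (PComp (code run_continue) (PComp run_test2 run_test1)) (to_nat (x, t)) 0 /\
  eval (PComp (code run_answer) (PComp run_test2 run_test1)) (to_nat (x, t)) 0.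
Proof.
  intros Hf. destruct (computes_eval_empty _ _ _ j (Hc i)) as [w0 Hw0].
  assert (H1 := HP i t k). rewrite Hf, <- run_query1_fn in H1.
  apply (run_stage t 0 w0 H1). rewrite run_query2_fn. exact Hw0.
Qed.

Lemma run_stage_ready t : av i t k = true -> t <= T ->
  eval (PComp (code run_continue) (PComp run_test2 run_test1)) (to_nat (x, t)) (if t <? T then 1 else 0) /\
  eval (PComp (code run_answer) (PComp run_test2 run_test1)) (to_nat (x, t))
    (if t <? T then 0 else S (R i j)).
Proof.
  intros Ht HtT. assert (H1 := HP i t k). rewrite Ht, <- run_query1_fn in H1.
  destruct (t <? T) eqn:Elt; [apply Nat.ltb_lt in Elt|apply Nat.ltb_ge in Elt].
  - apply (run_stage t _ 0 H1). rewrite run_query2_fn. apply HlT. exact Elt.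
  - assert (t = T) by lia. subst t. apply (run_stage T _ (S (R i j)) H1). rewrite run_query2_fn. exact HT.
Qed.

Lemma run_eval : eval Prun x (if av i T k then S (R i j) else 0).
Proof.
  destruct (av i T k) eqn:EavT.
  - assert (Hm : eval (PMu run_cond) x T).
    { constructor.
      - destruct (run_stage_ready T EavT (le_n _)) as [A _]. rewrite Nat.ltb_irrefl in A. exact A.
      - intros t Ht. exists 0.
        destruct (run_stage_ready t (Hmono _ _ _ _ EavT (Nat.lt_le_incl _ _ Ht)) (Nat.lt_le_incl _ _ Ht))
          as [A _].
        apply Nat.ltb_lt in Ht. rewrite Ht in A. exact A. }
    apply (run_finish _ _ _ Hm). destruct (run_stage_ready T EavT (le_n _)) as [_ B].
    rewrite Nat.ltb_irrefl in B. exact B.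
  - destruct (least_witness (fun t => av i t k = false) T EavT) as [t0 [Ht0 Hl0]].
    assert (Ht0T : t0 <= T).
    { destruct (Nat.le_gt_cases t0 T); auto. exfalso. apply (Hl0 T); auto. }
    assert (Hm : eval (PMu run_cond) x t0).
    { constructor.
      - apply (run_stage_pending t0 Ht0).
      - intros t Ht. exists 0.
        assert (Ht' : av i t k = true) by (destruct (av i t k) eqn:E; auto; exfalso; eapply Hl0; eauto).
        destruct (run_stage_ready t Ht' ltac:(lia)) as [A _].
        replace (t <? T) with true in A by (symmetry; apply Nat.ltb_lt; lia). exact A. }
    apply (run_finish _ _ _ Hm). apply (run_stage_pending t0 Ht0).
Qed.
End Query.

Lemma Prun_ok : computes Prun p (fun m => let (i, j) := of_nat (fn Sel m) in R i j).
Proof.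
  intros m. destruct (of_nat (fn Sel m)) as [i j] eqn:Eij.
  destruct (Hc i j) as [T [HT HlT]].
  destruct (Hev i T) as [K0 HK0].
  destruct (least_witness (fun k => av i T k = true) K0 HK0) as [K [HK HlK]].
  exists K. split.
  - generalize (run_eval m i j T Eij HT HlT K). rewrite HK. auto.
  - intros k Hk. generalize (run_eval m i j T Eij HT HlT k).
    destruct (av i T k) eqn:E; [exfalso; eapply HlK; eauto|auto].
Qed.
End Run.

Definition sumf (B : nat -> nat) k s := fold_right (fun m acc => B m + acc) 0 (seq k s).

Lemma sumf_zero B k s : sumf B k s = 0 <-> forall m, k <= m < k + s -> B m = 0.
Proof.
  revert k; induction s; intros k; cbn; split; intros H.
  - intros; lia.
  - reflexivity.
  - intros m Hm. assert (B k = 0 /\ sumf B (S k) s = 0) as [H1 H2] by (unfold sumf in *; lia).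
    destruct (Nat.eq_dec m k); [subst; auto|]. apply (IHs (S k)); auto; lia.
  - rewrite (H k) by lia. cbn. apply (IHs (S k)). intros m Hm. apply H. lia.
Qed.

Lemma sumf_mono B t t' : t' <= t -> sumf B 0 t = 0 -> sumf B 0 t' = 0.
Proof. intros H. rewrite !sumf_zero. intros Z m Hm. apply Z. lia. Qed.

Section Collect.
Variable h : prf.

Definition collect_arg : Prog := Ppair Pfst (Pcomp Psnd Psnd).
Definition collect_input : Prog := Ppair (Ppair collect_arg (Pcomp Pfst Psnd)) (Pcomp Pfst Psnd).
(* The loop state is [(index, (sum of flags, code of collected values))]. *)
Definition collect_init : Prog := Ppair Psnd Pzero.
Definition collect_query : Prog := Ppair (Pcomp Pfst Pfst) (Ppred (Pcomp Pfst (Pcomp Psnd Psnd))).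
Definition collect_update : Prog :=
  let st := Pcomp Psnd (Pcomp Psnd Pfst) in
  let hv := Psnd in
  Ppair (Ppred (Pcomp Pfst st))
        (Ppair (Padd (Pcomp Pfst hv) (Pcomp Pfst (Pcomp Psnd st)))
               (Psucc_of (Ppair (Pcomp Psnd hv) (Pcomp Psnd (Pcomp Psnd st))))).
Definition collect_step : prf := PComp (code collect_update) (PPair PId (PComp h (code collect_query))).
Definition collect_result : Prog := Pcomp (Pifz (Psucc_of Psnd) Pzero Pfst) Psnd.
Definition Pcollect : prf :=
  PComp (code collect_result) (PComp (PRec (code collect_init) collect_step) (code collect_input)).

Lemma Pcollect_total i t c (B E : nat -> nat) :
  (forall m, m < t -> eval h (to_nat (to_nat (i, c), m)) (to_nat (B m, E m))) ->
  eval Pcollect (to_nat (i, to_nat (t, c)))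
    (if sumf B 0 t =? 0 then S (lcode (map E (seq 0 t))) else 0).
Proof.
  intros Hh. unfold Pcollect.
  set (ys := fun s => to_nat (t - s, to_nat (sumf B (t - s) s, lcode (map E (seq (t - s) s))))).
  eapply eval_out; [econstructor; [econstructor; [apply code_ok|]|apply code_ok]|].
  - eapply eval_in; [apply (eval_PRec_iter _ _ (to_nat (to_nat (i, c), t)) t ys)|].
    + eapply eval_out; [apply code_ok|]. unfold ys. cbn [fn collect_init Ppair Psnd Pzero]. simpof.
      rewrite Nat.sub_0_r. reflexivity.
    + intros s Hs. unfold collect_step.
      assert (Hin : fn collect_query (to_nat (to_nat (to_nat (i, c), t), to_nat (s, ys s))) =
                    to_nat (to_nat (i, c), t - S s)).
      { unfold ys. cbn [fn collect_query Ppair Pcomp Pfst Psnd Ppred]. simpof. f_equal. f_equal. lia. }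
      eapply eval_out.
      { econstructor; [constructor; [constructor|econstructor; [apply code_ok|]]|apply code_ok].
        rewrite Hin; apply Hh; lia. }
      cbn [fn collect_update Ppair Pcomp Pfst Psnd Ppred Padd Psucc_of]. unfold ys. simpof.
      replace (Nat.pred (t - s)) with (t - S s) by lia.
      replace (t - s) with (S (t - S s)) by lia. reflexivity.
    + cbn [fn collect_input Ppair collect_arg Pcomp Pfst Psnd]. simpof. reflexivity.
  - unfold ys. cbn [fn collect_result Ppair Pcomp Pfst Psnd Pifz Pzero Psucc_of]. simpof.
    rewrite Nat.sub_diag. unfold sumf. destruct (fold_right _ _ _); reflexivity.
Qed.

Lemma Pcollect_ok i t c (B E : nat -> nat) :
  (forall m, m < t -> exists v, eval h (to_nat (to_nat (i, c), m)) (to_nat (B m, v)) /\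
                          (B m = 0 -> v = E m)) ->
  eval Pcollect (to_nat (i, to_nat (t, c)))
    (if sumf B 0 t =? 0 then S (lcode (map E (seq 0 t))) else 0).
Proof.
  intros H.
  assert (H' : forall m, exists v, m < t ->
     eval h (to_nat (to_nat (i, c), m)) (to_nat (B m, v)) /\ (B m = 0 -> v = E m)).
  { intros m. destruct (classic (m < t)) as [Hm|Hm].
    - destruct (H m Hm) as [v Hv]. exists v. auto.
    - exists 0. intros; contradiction. }
  destruct (functional_choice _ H') as [f Hf].
  pose proof (Pcollect_total i t c B f (fun m Hm => proj1 (Hf m Hm))) as R.
  destruct (sumf B 0 t =? 0) eqn:Es; [|exact R].
  apply Nat.eqb_eq in Es. rewrite sumf_zero in Es.
  erewrite map_ext_in; [exact R|]. intros m Hm. apply in_seq in Hm.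
  symmetry. apply (proj2 (Hf m ltac:(lia))). apply Es. lia.
Qed.
End Collect.

(** Query [n] is answered from the prefix of length [n + 1]. *)
Definition Pmap (F : Prog) : Prog :=
  Pifz Pzero (Psucc_of (Pcomp F (Pcomp Pnth (Ppair Psnd Pfst)))) (Pcomp Pdrop (Ppair Psnd Pfst)).

Lemma Pmap_ok F q : computes (code (Pmap F)) q (fun n => fn F (q n)).
Proof.
  intro n. exists (S n). split.
  - eapply eval_out; [apply code_ok|].
    cbn [fn Pmap Pifz Pzero Psucc_of Pcomp Ppair Psnd Pfst Pnth Pdrop Pext]. simpof.
    rewrite ifz_dropc_prefix, (proj2 (Nat.ltb_lt n (S n))) by lia.
    rewrite nthc_lcode, nth_prefix by lia. reflexivity.
  - intros j Hj. eapply eval_out; [apply code_ok|].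
    cbn [fn Pmap Pifz Pzero Psucc_of Pcomp Ppair Psnd Pfst Pnth Pdrop Pext]. simpof.
    rewrite ifz_dropc_prefix, (proj2 (Nat.ltb_ge n j)) by lia. reflexivity.
Qed.

Definition Pcopy : Prog := Pmap Pid.

Lemma Pcopy_ok q : computes (code Pcopy) q q.
Proof. apply (computes_ext _ _ _ _ (Pmap_ok Pid q)). reflexivity. Qed.

(** [Pselect kappa] produces, from an oracle [p], the sequences [selected p i]
    whose entries are constants or entries of [p], as dictated by [kappa]:
    [kappa (i, m) = (0, v)] gives [v] and [kappa (i, m) = (S _, v)] gives [p v]. *)
Section Select.
Variable kappa : Prog.
Definition select_entry (i m : nat) := of_nat (fn kappa (to_nat (i, m))).

(* The input of these programs is [((i, c), m)]. *)
Definition select_code : Prog := Pcomp Psnd Pfst.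
Definition select_tag : Prog := Pcomp Pfst (Pcomp kappa (Ppair (Pcomp Pfst Pfst) Psnd)).
Definition select_val : Prog := Pcomp Psnd (Pcomp kappa (Ppair (Pcomp Pfst Pfst) Psnd)).
Definition select_step : Prog :=
  Ppair (Pifz Pzero (Pifz (Pconst 1) Pzero (Pcomp Pdrop (Ppair select_code select_val))) select_tag)
        (Pifz select_val (Pcomp Pnth (Ppair select_code select_val)) select_tag).
Definition Pselect : prf := Pcollect (code select_step).

Variable p : Baire.
Definition selected (i m : nat) :=
  let (tag, val) := select_entry i m in if tag =? 0 then val else p val.
Definition select_pending (i k m : nat) :=
  let (tag, val) := select_entry i m in if tag =? 0 then 0 else if val <? k then 0 else 1.
Definition select_ready (i t k : nat) := sumf (select_pending i k) 0 t =? 0.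

Lemma Pselect_spec i t k : eval Pselect (to_nat (i, to_nat (t, lcode (prefix p k))))
   (if select_ready i t k then S (lcode (prefix (selected i) t)) else 0).
Proof.
  unfold Pselect, select_ready.
  eapply eval_out; [apply (Pcollect_ok _ _ _ _ (select_pending i k) (selected i))|].
  - intros m Hm. exists (snd (of_nat (fn select_step (to_nat (to_nat (i, lcode (prefix p k)), m))))).
    split.
    + eapply eval_out; [apply code_ok|].
      cbn [fn select_step Ppair Pifz Pzero Pconst Pcomp select_code select_val select_tag
           Pfst Psnd Pdrop Pnth Pext].
      simpof. f_equal. unfold select_pending. fold (select_entry i m).
      destruct (select_entry i m) as [tag val]. cbn [fst snd].
      destruct tag; cbn [Nat.eqb ifz]; [reflexivity|].
      rewrite ifz_dropc_prefix. destruct (val <? k); reflexivity.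
    + intros Hb.
      cbn [fn select_step Ppair Pifz Pzero Pconst Pcomp select_code select_val select_tag
           Pfst Psnd Pdrop Pnth Pext].
      simpof. unfold select_pending, selected in *. fold (select_entry i m) in *.
      destruct (select_entry i m) as [tag val]. cbn [fst snd].
      destruct tag; cbn [Nat.eqb ifz] in *; [reflexivity|].
      destruct (val <? k) eqn:E; [apply Nat.ltb_lt in E|discriminate].
      rewrite nthc_lcode, nth_prefix by auto. reflexivity.
  - destruct (sumf (select_pending i k) 0 t =? 0); reflexivity.
Qed.

Lemma select_ready_mono i t t' k : select_ready i t k = true -> t' <= t -> select_ready i t' k = true.
Proof. unfold select_ready. rewrite !Nat.eqb_eq. intros; eapply sumf_mono; eauto. Qed.

Lemma select_ready_eventually i t : exists k, select_ready i t k = true.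
Proof.
  induction t as [|t [k Hk]]; [exists 0; reflexivity|].
  exists (k + S (snd (select_entry i t))). unfold select_ready in *.
  apply Nat.eqb_eq. apply Nat.eqb_eq in Hk. rewrite sumf_zero in *. intros m Hm. unfold select_pending.
  assert (m < t \/ m = t) as [Hl| ->] by lia.
  - specialize (Hk m ltac:(lia)). unfold select_pending in Hk. destruct (select_entry i m) as [tag val].
    destruct (tag =? 0); auto. destruct (val <? k) eqn:E; [|discriminate].
    apply Nat.ltb_lt in E. replace (val <? k + S (snd (select_entry i t))) with true; auto.
    symmetry; apply Nat.ltb_lt. lia.
  - destruct (select_entry i t) as [tag val]. cbn [snd]. destruct (tag =? 0); auto.
    replace (val <? k + S val) with true; auto. symmetry; apply Nat.ltb_lt. lia.
Qed.
End Select.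

Lemma Prun_select_ok e2 kappa Sel p (R : nat -> Baire) :
  (forall i, computes e2 (selected kappa p i) (R i)) ->
  computes (Prun e2 (Pselect kappa) Sel) p (fun m => let (i, j) := of_nat (fn Sel m) in R i j).
Proof.
  intros Hc. apply (Prun_ok e2 (Pselect kappa) Sel p (selected kappa p) R (select_ready kappa)).
  - apply Pselect_spec.
  - apply select_ready_mono.
  - apply select_ready_eventually.
  - exact Hc.
Qed.

Lemma Pbuild_nth_prefix p k j : j <= k ->
  fn (Pbuild Pnth) (to_nat (lcode (prefix p k), j)) = lcode (prefix p j).
Proof.
  intros H. rewrite Pbuild_fn, cancel_of_to. unfold build. f_equal. unfold prefix.
  apply map_ext_in. intros m Hm. apply in_seq in Hm.
  cbn [fn Pnth Pext]. rewrite cancel_of_to, nthc_lcode.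
  fold (prefix p k). apply nth_prefix. lia.
Qed.

(** [Pprefixes e1] produces prefixes of the output of [e1]: on [(i, (t, c))] it
    looks, for each [m < t], for the least [j <= length c] at which [e1]
    answers query [m] from the prefix of length [j] of [c]. *)
Section Prefixes.
Variable e1 : prf.

(* The input of [pre_setup] is [(((i, c), m), j)]; it appends [(j <= length c, c|j)]. *)
Definition pre_code : Prog := Pcomp Psnd (Pcomp Pfst Pfst).
Definition pre_avail : Prog :=
  Pifz (Pconst 1) (Pifz Pzero (Pconst 1) (Pcomp Pdrop (Ppair pre_code (Ppred Psnd)))) Psnd.
Definition pre_take : Prog := Pcomp (Pbuild Pnth) (Ppair pre_code Psnd).
Definition pre_setup : Prog := Ppair Pid (Ppair pre_avail (Pifz Pzero pre_take pre_avail)).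
Definition pre_query : Prog := Ppair (Pcomp Psnd (Pcomp Pfst Pfst)) (Pcomp Psnd Psnd).
Definition pre_test : prf := PPair PId (PComp e1 (code pre_query)).
Definition pre_avail_of : Prog := Pcomp Pfst (Pcomp Psnd Pfst).
Definition pre_continue : Prog := Pifz Pzero (Pifz (Pconst 1) Pzero Psnd) pre_avail_of.
Definition pre_result : Prog := Ppair (Pifz (Pconst 1) Pzero pre_avail_of) (Ppred Psnd).
Definition pre_cond : prf := PComp (code pre_continue) (PComp pre_test (code pre_setup)).
Definition pre_search : prf :=
  PComp (code pre_result) (PComp pre_test (PComp (code pre_setup) (PPair PId (PMu pre_cond)))).
Definition Pprefixes : prf := Pcollect pre_search.

Lemma pre_chain y r : eval e1 (fn pre_query (fn pre_setup y)) r ->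
  forall F : Prog, eval (PComp (code F) (PComp pre_test (code pre_setup))) y
                        (fn F (to_nat (fn pre_setup y, r))).
Proof.
  intros H F. econstructor; [|apply code_ok]. econstructor; [apply code_ok|].
  constructor; [constructor|]. econstructor; [apply code_ok|exact H].
Qed.

Variable p q : Baire.
Variable Kf : nat -> nat.
Hypothesis HK1 : forall m, eval e1 (to_nat (m, lcode (prefix p (Kf m)))) (S (q m)).
Hypothesis HK2 : forall m j, j < Kf m -> eval e1 (to_nat (m, lcode (prefix p j))) 0.

Section Query.
Variables i k m : nat.
Let y := to_nat (to_nat (i, lcode (prefix p k)), m).

Lemma pre_avail_fn j : fn pre_avail (to_nat (y, j)) = if j <=? k then 1 else 0.
Proof.
  unfold y. cbn [fn pre_avail Ppair Pcomp Pfst Psnd Pifz pre_code Pconst Pzero Ppred Pdrop Pext].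
  simpof. destruct j as [|j]; [reflexivity|]. cbn [ifz Nat.pred].
  rewrite ifz_dropc_prefix. reflexivity.
Qed.

Lemma pre_query_fn j :
  fn pre_query (fn pre_setup (to_nat (y, j))) = to_nat (m, if j <=? k then lcode (prefix p j) else 0).
Proof.
  assert (A := pre_avail_fn j).
  cbn [fn pre_query pre_setup Ppair Pcomp Pfst Psnd Pid Pifz pre_take pre_code] in *. simpof.
  rewrite A. unfold y. simpof. destruct (j <=? k) eqn:E; cbn [ifz]; [|reflexivity].
  apply Nat.leb_le in E. rewrite Pbuild_nth_prefix by lia. reflexivity.
Qed.

Lemma pre_continue_fn j r :
  fn pre_continue (to_nat (fn pre_setup (to_nat (y, j)), r)) = if j <=? k then ifz 1 0 r else 0.
Proof.
  cbn [fn pre_continue pre_avail_of pre_setup Pifz Pzero Pconst Psnd Pfst Pcomp Ppair]. simpof.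
  rewrite pre_avail_fn. destruct (j <=? k); reflexivity.
Qed.

Lemma pre_result_fn j r :
  fn pre_result (to_nat (fn pre_setup (to_nat (y, j)), r)) = to_nat (if j <=? k then 0 else 1, Nat.pred r).
Proof.
  cbn [fn pre_result pre_avail_of pre_setup Pifz Pzero Pconst Psnd Pfst Pcomp Ppair Ppred]. simpof.
  rewrite pre_avail_fn. destruct (j <=? k); reflexivity.
Qed.

Lemma pre_search_finish n v : eval (PMu pre_cond) y n ->
  eval (PComp (code pre_result) (PComp pre_test (code pre_setup))) (to_nat (y, n)) v ->
  eval pre_search y v.
Proof.
  intros Hm Hf. inversion Hf as [| | | | | |f g x0 y0 z Hy Hz| | |]; subst.
  inversion Hy as [| | | | | |f' g' x1 y1 z1 Hy1 Hz1| | |]; subst.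
  unfold pre_search. econstructor; [|exact Hz]. econstructor; [|exact Hz1].
  econstructor; [|exact Hy1]. eapply eval_out; [constructor; [constructor|exact Hm]|]. reflexivity.
Qed.

Lemma pre_search_ok : exists v, eval pre_search y (to_nat (if Kf m <=? k then 0 else 1, v)) /\
   (Kf m <= k -> v = q m).
Proof.
  assert (Hlow : forall j, j < Kf m -> j <= k -> eval pre_cond (to_nat (y, j)) 1).
  { intros j Hj Hjk. eapply eval_out; [apply pre_chain; rewrite pre_query_fn|];
      rewrite ?pre_continue_fn; replace (j <=? k) with true by (symmetry; apply Nat.leb_le; auto);
      [apply HK2; auto|reflexivity]. }
  destruct (Kf m <=? k) eqn:EK; [apply Nat.leb_le in EK|apply Nat.leb_gt in EK].
  - exists (q m). split; auto.
    assert (HT : eval e1 (fn pre_query (fn pre_setup (to_nat (y, Kf m)))) (S (q m))).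
    { rewrite pre_query_fn. replace (Kf m <=? k) with true by (symmetry; apply Nat.leb_le; auto).
      apply HK1. }
    apply (pre_search_finish (Kf m)).
    + constructor.
      * eapply eval_out; [apply (pre_chain _ _ HT)|]. rewrite pre_continue_fn.
        replace (Kf m <=? k) with true by (symmetry; apply Nat.leb_le; auto). reflexivity.
      * intros j Hj. exists 0. apply Hlow; lia.
    + eapply eval_out; [apply (pre_chain _ _ HT)|]. rewrite pre_result_fn.
      replace (Kf m <=? k) with true by (symmetry; apply Nat.leb_le; auto). reflexivity.
  - assert (E0 : exists w0, eval e1 (to_nat (m, 0)) w0) by (exists 0; apply (HK2 m 0); lia).
    destruct E0 as [w0 Hw0].
    exists (Nat.pred w0). split; [|lia].
    assert (HT : eval e1 (fn pre_query (fn pre_setup (to_nat (y, S k)))) w0).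
    { rewrite pre_query_fn. replace (S k <=? k) with false by (symmetry; apply Nat.leb_gt; auto).
      exact Hw0. }
    apply (pre_search_finish (S k)).
    + constructor.
      * eapply eval_out; [apply (pre_chain _ _ HT)|]. rewrite pre_continue_fn.
        replace (S k <=? k) with false by (symmetry; apply Nat.leb_gt; auto). reflexivity.
      * intros j Hj. exists 0. apply Hlow; lia.
    + eapply eval_out; [apply (pre_chain _ _ HT)|]. rewrite pre_result_fn.
      replace (S k <=? k) with false by (symmetry; apply Nat.leb_gt; auto). reflexivity.
Qed.
End Query.

Definition prefixes_ready (i t k : nat) := sumf (fun m => if Kf m <=? k then 0 else 1) 0 t =? 0.

Lemma Pprefixes_spec i t k : eval Pprefixes (to_nat (i, to_nat (t, lcode (prefix p k))))
   (if prefixes_ready i t k then S (lcode (prefix q t)) else 0).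
Proof.
  unfold Pprefixes, prefixes_ready.
  eapply eval_out; [apply (Pcollect_ok _ _ _ _ (fun m => if Kf m <=? k then 0 else 1) q)|].
  - intros m Hm. destruct (pre_search_ok i k m) as [v [Hv1 Hv2]]. exists v. split; auto.
    intros H. apply Hv2. destruct (Kf m <=? k) eqn:E; [apply Nat.leb_le; auto|discriminate].
  - reflexivity.
Qed.

Lemma prefixes_ready_mono i t t' k : prefixes_ready i t k = true -> t' <= t -> prefixes_ready i t' k = true.
Proof. unfold prefixes_ready. rewrite !Nat.eqb_eq. intros; eapply sumf_mono; eauto. Qed.

Lemma prefixes_ready_eventually i t : exists k, prefixes_ready i t k = true.
Proof.
  induction t as [|t [k Hk]]; [exists 0; reflexivity|].
  exists (k + Kf t). unfold prefixes_ready in *. apply Nat.eqb_eq. apply Nat.eqb_eq in Hk.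
  rewrite sumf_zero in *. intros m Hm.
  assert (m < t \/ m = t) as [Hl| ->] by lia.
  - specialize (Hk m ltac:(lia)). cbn beta in Hk. destruct (Kf m <=? k) eqn:E; [|discriminate].
    apply Nat.leb_le in E. replace (Kf m <=? k + Kf t) with true; auto. symmetry; apply Nat.leb_le. lia.
  - replace (Kf t <=? k + Kf t) with true; auto. symmetry; apply Nat.leb_le. lia.
Qed.
End Prefixes.

Definition Pindex0 : Prog := Ppair Pzero Pid.
Definition Pseq (e1 e2 : prf) : prf := Prun e2 (Pprefixes e1) Pindex0.

Lemma Pindex0_fn (R : nat -> Baire) m : (let (i, j) := of_nat (fn Pindex0 m) in R i j) = R 0 m.
Proof. cbn [fn Pindex0 Ppair Pzero Pid]. rewrite cancel_of_to. reflexivity. Qed.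

Lemma Pseq_ok e1 e2 p q r : computes e1 p q -> computes e2 q r -> computes (Pseq e1 e2) p r.
Proof.
  intros H1 H2. destruct (computes_modulus _ _ _ H1) as [Kf [HK1 HK2]].
  eapply computes_ext; [|intros n; apply (Pindex0_fn (fun _ => r))].
  apply (Prun_ok e2 (Pprefixes e1) Pindex0 p (fun _ => q) (fun _ => r) (prefixes_ready Kf)).
  - apply Pprefixes_spec; auto.
  - apply prefixes_ready_mono.
  - apply prefixes_ready_eventually.
  - intros; exact H2.
Qed.

Section Join.
Variable ea eb : prf.

(* On [(n, c)] with [of_nat n = (i, j)], the recursion on [i] starts with [ea]
   on [(j, c)] if [i = 0], and on [(j, 0)] otherwise, where it terminates since
   [ea] answers or gives up on the empty prefix; its step runs [eb] on [(j, c)]. *)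
Definition join_input : Prog :=
  let i := Pcomp Pfst Pfst in
  let j := Pcomp Psnd Pfst in
  Ppair (Ppair (Ppair j (Pifz Psnd Pzero i)) (Ppair j Psnd)) i.
Definition Pjoin : prf := PComp (PRec (PComp ea PFst) (PComp eb (PComp PSnd PFst))) (code join_input).

Variable p Ya Yb : Baire.
Hypothesis Ha : computes ea p Ya.
Hypothesis Hb : computes eb p Yb.

Lemma Pjoin_ok : computes Pjoin p (fun n => let (i, j) := of_nat n in if i =? 0 then Ya j else Yb j).
Proof.
  intro n. destruct (of_nat n) as [i j] eqn:Eij.
  assert (Hin : forall c, fn join_input (to_nat (n, c)) =
                          to_nat (to_nat (to_nat (j, ifz c 0 i), to_nat (j, c)), i)).
  { intros c. cbn [fn join_input Ppair Pcomp Pfst Psnd Pifz Pzero]. simpof. rewrite Eij. reflexivity. }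
  destruct i as [|i].
  - cbn [Nat.eqb]. destruct (Ha j) as [K [A B]]. exists K. split.
    + econstructor; [apply code_ok|]. rewrite Hin. cbn [ifz].
      apply (eval_PRec_iter _ _ _ 0 (fun _ => S (Ya j))). econstructor; [apply eval_fst|exact A]. intros; lia.
    + intros k Hk. econstructor; [apply code_ok|]. rewrite Hin. cbn [ifz].
      apply (eval_PRec_iter _ _ _ 0 (fun _ => 0)). econstructor; [apply eval_fst|apply B; auto]. intros; lia.
  - cbn [Nat.eqb]. destruct (computes_eval_empty _ _ _ j Ha) as [w0 Hw0].
    destruct (Hb j) as [K [A B]].
    assert (Run_eb : forall k v, eval eb (to_nat (j, lcode (prefix p k))) v ->
       eval Pjoin (to_nat (n, lcode (prefix p k))) v).
    { intros k v Hv. econstructor; [apply code_ok|]. rewrite Hin. cbn [ifz].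
      apply (eval_PRec_iter _ _ _ (S i) (fun m => match m with 0 => w0 | _ => v end)).
      - econstructor; [apply eval_fst|exact Hw0].
      - intros m _. econstructor; [|exact Hv]. econstructor; [apply eval_fst|apply eval_snd]. }
    exists K. split; [apply Run_eb; exact A|]. intros k Hk. apply Run_eb. apply B. auto.
Qed.
End Join.

(** The loop state is [(parity, half)]. *)
Definition parity_half_step : Prog :=
  Pifz (Ppair (Pconst 1) (Pcomp Psnd Psnd)) (Ppair Pzero (Psucc_of (Pcomp Psnd Psnd))) (Pcomp Pfst Psnd).

Lemma parity_half_iter m : Nat.iter m (fun s => fn parity_half_step (to_nat (0, s))) 0 =
   to_nat (if Nat.even m then 0 else 1, Nat.div2 m).
Proof.
  set (P := fun m => Nat.iter m (fun s => fn parity_half_step (to_nat (0, s))) 0 =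
                     to_nat (if Nat.even m then 0 else 1, Nat.div2 m)).
  enough (H : P m /\ P (S m)) by apply H.
  induction m as [|m [IH0 IH1]]; [split; reflexivity|]. split; [exact IH1|].
  unfold P in *. rewrite !Nat.iter_succ, IH0. cbn [Nat.even Nat.div2].
  destruct (Nat.even m); cbn [fn parity_half_step Pifz Ppair Pconst Pzero Psucc_of Pcomp Pfst Psnd];
    repeat progress (cbn [ifz]; simpof); reflexivity.
Qed.

Definition Pparity_half : Prog :=
  Pext (Pcomp (Piter Pzero parity_half_step) (Ppair Pzero Pid))
    (fun x => to_nat (if Nat.even x then 0 else 1, Nat.div2 x))
    (fun x => ltac:(cbn [fn Pcomp Piter Ppair Pzero Pid]; unfold iter_pair_fn; simpof;
                    apply parity_half_iter)).

Fixpoint comb_turn (ds : nat -> list bool -> player) (n : nat) (w : list bool) : player :=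
  match w with
  | false :: w' => comb_turn ds (S n) w'
  | true :: true :: w' => ds n w'
  | _ => P1
  end.

Lemma comb_turn_zeros ds n z w : comb_turn ds n (repeat false z ++ w) = comb_turn ds (n + z) w.
Proof. revert n; induction z; intros n; cbn; [rewrite Nat.add_0_r; auto|]. rewrite IHz. f_equal. lia. Qed.

Section Game.
Variable xs : nat -> (list bool -> player) * (Cantor -> Prop).
Definition subgame_set n := snd (xs n).
Definition subgame_turn n := fst (xs n).

Definition outcome2_set : Cantor -> Prop := zero_op (fun n => rescale [true] (subgame_set n)).
Definition outcome12_set : Cantor -> Prop :=
  zero_op (fun n x => rescale [false] (fun _ => True) x \/ rescale [true] (subgame_set n) x).

(** The valuation is defined classically: only the names of its upper sets
    have to be computable. *)
Definition comb_val (x : Cantor) : nat :=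
  if excluded_middle_informative (outcome2_set x) then 2
  else if excluded_middle_informative (outcome12_set x) then 1 else 0.

Lemma comb_val_lt x : comb_val x < 3.
Proof.
  unfold comb_val. destruct (excluded_middle_informative _); [lia|].
  destruct (excluded_middle_informative _); lia.
Qed.

Definition lt_pref (a : player) (o o' : nat) : bool := match a with P1 => o <? o' | P2 => o' <? o end.

Definition comb_game : game2 :=
  {| g_nout := 3; g_turn := comb_turn subgame_turn 0; g_val := comb_val; g_val_lt := comb_val_lt;
     g_pref := lt_pref |}.

Lemma outcome2_outcome12 x : outcome2_set x -> outcome12_set x.
Proof.
  unfold outcome2_set, outcome12_set, zero_op. intros [H|[n [H1 [H2 H3]]]]; [left; auto|right].
  exists n. auto.
Qed.

Lemma comb_val_2 x : comb_val x = 2 <-> outcome2_set x.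
Proof.
  unfold comb_val. destruct (excluded_middle_informative _); [tauto|].
  destruct (excluded_middle_informative _); split; intros; try lia; tauto.
Qed.

Lemma comb_val_ge1 x : 1 <= comb_val x <-> outcome12_set x.
Proof.
  unfold comb_val. destruct (excluded_middle_informative _) as [H|H].
  - split; intros; auto using outcome2_outcome12; lia.
  - destruct (excluded_middle_informative _); split; intros; try lia; tauto.
Qed.

Lemma comb_game_antag_linear : antag_linear comb_game.
Proof.
  cbn. split; [|split; [|split]].
  - intros o _. apply Nat.ltb_irrefl.
  - intros o1 o2 o3 _ _ _ H1 H2. apply Nat.ltb_lt in H1, H2. apply Nat.ltb_lt. lia.
  - intros o1 o2 _ _ H. destruct (Nat.lt_trichotomy o1 o2) as [h|[h|h]];
      [left|contradiction|right]; apply Nat.ltb_lt; auto.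
  - reflexivity.
Qed.
End Game.

Lemma playpre_length s h n : length (playpre s h n) = n.
Proof. induction n; cbn [playpre]; [reflexivity|]. rewrite length_app, IHn. cbn. lia. Qed.

Lemma play_unfold s h n :
  play s h n = if n <? length h then nth n h false else s (playpre s h n).
Proof.
  unfold play. cbn [playpre]. rewrite app_nth2; rewrite playpre_length; [|lia].
  rewrite Nat.sub_diag. reflexivity.
Qed.

Lemma prefix_play s h n : prefix (play s h) n = playpre s h n.
Proof.
  induction n; [reflexivity|]. rewrite prefix_S, IHn. cbn [playpre]. f_equal. f_equal.
  rewrite play_unfold. reflexivity.
Qed.

Lemma play_lt s h n : n < length h -> play s h n = nth n h false.
Proof. intros H. rewrite play_unfold. rewrite (proj2 (Nat.ltb_lt _ _) H). reflexivity. Qed.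

Lemma play_ge s h n : length h <= n -> play s h n = s (prefix (play s h) n).
Proof. intros H. rewrite play_unfold, prefix_play. rewrite (proj2 (Nat.ltb_ge _ _) H). reflexivity. Qed.

Lemma play_unique s h (x : Cantor) :
  (forall n, n < length h -> x n = nth n h false) ->
  (forall n, length h <= n -> x n = s (prefix x n)) ->
  forall n, x n = play s h n.
Proof.
  intros H1 H2 n. induction n as [n IH] using (well_founded_induction lt_wf).
  destruct (Nat.lt_ge_cases n (length h)).
  - rewrite H1, play_lt; auto.
  - rewrite H2, play_ge by auto. f_equal. apply prefix_ext. intros m Hm. apply IH. auto.
Qed.

Lemma firstn_prefix (x : Cantor) n k : k <= n -> firstn k (prefix x n) = prefix x k.
Proof.
  intros H. unfold prefix. rewrite firstn_map. f_equal.
  replace n with (k + (n - k)) by lia. rewrite seq_app, firstn_app, length_seq, Nat.sub_diag.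
  rewrite firstn_all2 by (rewrite length_seq; lia). cbn. rewrite app_nil_r. reflexivity.
Qed.

Lemma skipn_prefix (x : Cantor) n k : k <= n -> skipn k (prefix x n) = map x (seq k (n - k)).
Proof.
  intros H. unfold prefix. rewrite skipn_map. f_equal.
  replace n with (k + (n - k)) at 1 by lia. rewrite seq_app, skipn_app, length_seq, Nat.sub_diag.
  rewrite skipn_all2 by (rewrite length_seq; lia). reflexivity.
Qed.

Lemma prefix_prepend w (y : Cantor) n : length w <= n ->
  prefix (prepend w y) n = w ++ prefix y (n - length w).
Proof.
  intros H. apply nth_ext with (d := false) (d' := false).
  - rewrite length_app, !prefix_length. lia.
  - intros k Hk. rewrite prefix_length in Hk. rewrite nth_prefix by auto. unfold prepend.
    destruct (k <? length w) eqn:E; [apply Nat.ltb_lt in E|apply Nat.ltb_ge in E].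
    + rewrite app_nth1; auto.
    + rewrite app_nth2 by auto. rewrite nth_prefix by lia. reflexivity.
Qed.

Lemma play_shift s w u0 n :
  play s (w ++ u0) n = prepend w (play (fun u => s (w ++ u)) u0) n.
Proof.
  symmetry. revert n. apply play_unique.
  - intros n Hn. rewrite length_app in Hn. unfold prepend.
    destruct (n <? length w) eqn:E; [apply Nat.ltb_lt in E|apply Nat.ltb_ge in E].
    + rewrite app_nth1; auto.
    + rewrite app_nth2 by auto. apply play_lt. lia.
  - intros n Hn. rewrite length_app in Hn. unfold prepend at 1.
    replace (n <? length w) with false by (symmetry; apply Nat.ltb_ge; lia).
    rewrite play_ge by lia. rewrite prefix_prepend by lia. reflexivity.
Qed.

Lemma play_nil_unique s (y : Cantor) : (forall n, y n = s (prefix y n)) -> forall n, y n = play s [] n.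
Proof. intros H. apply play_unique; [cbn; intros; lia|]. intros; auto. Qed.

Lemma prefix_play_short s h n : n <= length h -> prefix (play s h) n = firstn n h.
Proof.
  intros H. apply nth_ext with (d := false) (d' := false).
  - rewrite prefix_length, length_firstn. lia.
  - intros k Hk. rewrite prefix_length in Hk. rewrite nth_prefix, play_lt by lia.
    rewrite nth_firstn. replace (k <? n) with true by (symmetry; apply Nat.ltb_lt; auto). reflexivity.
Qed.

Lemma play_step s h : play s h = play s (h ++ [s h]).
Proof.
  apply functional_extensionality. apply play_unique.
  - intros n Hn. rewrite length_app in Hn. cbn in Hn.
    destruct (Nat.lt_ge_cases n (length h)).
    + rewrite app_nth1 by auto. apply play_lt; auto.
    + assert (n = length h) by lia. subst n. rewrite app_nth2, Nat.sub_diag by lia. cbn [nth].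
      rewrite play_ge by lia. f_equal. rewrite prefix_play_short by lia. apply firstn_all.
  - intros n Hn. rewrite length_app in Hn. cbn in Hn. apply play_ge. lia.
Qed.

Lemma prepend_nil (x : Cantor) : prepend [] x = x.
Proof.
  apply functional_extensionality. intros n. unfold prepend. cbn. rewrite Nat.sub_0_r. reflexivity.
Qed.

(** * Strategies winning from every winning position *)

Fixpoint least_upto (P : nat -> Prop) (n : nat) : option nat :=
  match n with
  | 0 => if excluded_middle_informative (P 0) then Some 0 else None
  | S n => match least_upto P n with
           | Some k => Some k
           | None => if excluded_middle_informative (P (S n)) then Some (S n) else None
           end
  end.

Lemma least_upto_spec P n : match least_upto P n with
  | Some k => k <= n /\ P k /\ forall m, m < k -> ~ P m
  | None => forall m, m <= n -> ~ P m end.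
Proof.
  induction n; cbn [least_upto].
  - destruct (excluded_middle_informative (P 0)); [split; [lia|split; auto; intros; lia]|].
    intros m Hm. replace m with 0 by lia. auto.
  - destruct (least_upto P n) as [k|].
    + destruct IHn as [H1 H2]. split; [lia|auto].
    + destruct (excluded_middle_informative (P (S n))).
      * split; auto. split; auto. intros m Hm. apply IHn. lia.
      * intros m Hm. destruct (Nat.eq_dec m (S n)); [subst; auto|]. apply IHn. lia.
Qed.

Lemma least_upto_some P n k : P k -> k <= n -> (forall m, m < k -> ~ P m) -> least_upto P n = Some k.
Proof.
  intros Hk Hkn Hmin. pose proof (least_upto_spec P n) as H. destruct (least_upto P n) as [k'|].
  - destruct H as [H1 [H2 H3]]. f_equal. destruct (Nat.lt_trichotomy k k') as [h|[h|h]]; auto.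
    + exfalso. apply (H3 k); auto.
    + exfalso. apply (Hmin k'); auto.
  - exfalso. apply (H k); auto.
Qed.

Lemma map_seq_shift (x : nat -> bool) a n : map x (seq a n) = map (fun m => x (a + m)) (seq 0 n).
Proof.
  revert a; induction n; intros a; [reflexivity|]. cbn [seq map]. rewrite Nat.add_0_r. f_equal.
  rewrite IHn, <- seq_shift, map_map. apply map_ext. intros m. f_equal. lia.
Qed.

Section Uniform.
Variable d : list bool -> player.
Variable A : Cantor -> Prop.
Variable b : player.

Definition favourable (x : Cantor) : Prop := match b with P1 => A x | P2 => ~ A x end.
Definition wins_at w := has_win (fun v => d (w ++ v)) (unrescale w A) b.
Definition wins_at_with w (sg : list bool -> bool) :=
  forall t, (forall v, d (w ++ v) = b -> t v = sg v) -> favourable (prepend w (play t [])).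

Lemma wins_at_nil : has_win d A b -> wins_at [].
Proof.
  intros [sg H]. exists sg. intros t Ht. specialize (H t Ht). unfold unrescale.
  rewrite prepend_nil. exact H.
Qed.

Lemma local_strategies :
  exists local_strat : list bool -> list bool -> bool, forall w, wins_at w -> wins_at_with w (local_strat w).
Proof.
  apply (functional_choice (fun w sg => wins_at w -> wins_at_with w sg)).
  intros w. destruct (classic (wins_at w)) as [[sg H]|H].
  - exists sg. intros _ t Ht. specialize (H t Ht). unfold favourable. destruct b; exact H.
  - exists (fun _ => false). intros; contradiction.
Qed.

Variable local_strat : list bool -> list bool -> bool.
Hypothesis Hlocal : forall w, wins_at w -> wins_at_with w (local_strat w).

(** At history [w], [b] follows the local strategy of the shortest prefix of
    [w] from which [b] wins and whose local strategy [b] has followed since. *)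
Definition candidate (w : list bool) (l : nat) : Prop :=
  wins_at (firstn l w) /\ forall k, l <= k < length w -> d (firstn k w) = b ->
    nth k w false = local_strat (firstn l w) (skipn l (firstn k w)).

Definition uniform_strat (w : list bool) : bool :=
  match least_upto (candidate w) (length w) with
  | Some l => local_strat (firstn l w) (skipn l w)
  | None => false
  end.

Section Play.
Variable t : list bool -> bool.
Hypothesis Ht : forall u, d u = b -> t u = uniform_strat u.
Variable u0 : list bool.
Hypothesis Hu0 : wins_at u0.
Let x := play t u0.
Let L := length u0.

Definition candidate_play n l := wins_at (prefix x l) /\ forall k, l <= k < n -> d (prefix x k) = b ->
    x k = local_strat (prefix x l) (skipn l (prefix x k)).

Lemma candidate_prefix n l : l <= n -> (candidate (prefix x n) l <-> candidate_play n l).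
Proof.
  intros Hl. unfold candidate, candidate_play. rewrite prefix_length, firstn_prefix by auto.
  split; intros [H1 H2]; split; auto; intros k Hk Hd.
  - specialize (H2 k Hk). rewrite firstn_prefix in H2 by lia. rewrite nth_prefix in H2 by lia.
    apply H2; auto.
  - rewrite firstn_prefix by lia. rewrite nth_prefix by lia. apply H2; auto.
    rewrite firstn_prefix in Hd by lia. auto.
Qed.

Lemma candidate_play_mono n n' l : n' <= n -> candidate_play n l -> candidate_play n' l.
Proof. intros H [H1 H2]. split; auto. intros k Hk. apply H2. lia. Qed.

Lemma least_candidate_start : exists ls, least_upto (candidate (prefix x L)) L = Some ls.
Proof.
  pose proof (least_upto_spec (candidate (prefix x L)) L) as H.
  destruct (least_upto (candidate (prefix x L)) L) as [ls|]; [eauto|].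
  exfalso. apply (H L); auto.
  assert (E : prefix x L = u0) by (unfold x, L; rewrite prefix_play_short by lia; apply firstn_all).
  rewrite E. split.
  - rewrite firstn_all2 by lia. auto.
  - intros k Hk. unfold L in Hk. lia.
Qed.

(** Along the play the least candidate never changes. *)
Lemma least_candidate_stable ls : least_upto (candidate (prefix x L)) L = Some ls -> forall n, L <= n ->
  least_upto (candidate (prefix x n)) n = Some ls /\ candidate_play n ls /\ ls <= n /\
  forall m, m < ls -> ~ candidate_play n m.
Proof.
  intros Hs n Hn. induction n as [|n IH].
  - assert (L = 0) by lia. rewrite <- H. pose proof (least_upto_spec (candidate (prefix x L)) L) as S.
    rewrite Hs in S. destruct S as [S1 [S2 S3]]. split; auto. split; [apply candidate_prefix; auto|].
    split; auto. intros m Hm HC. apply (S3 m Hm). apply candidate_prefix; auto. lia.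
  - destruct (Nat.eq_dec L (S n)) as [E|E].
    + rewrite <- E. pose proof (least_upto_spec (candidate (prefix x L)) L) as S. rewrite Hs in S.
      destruct S as [S1 [S2 S3]]. split; auto. split; [apply candidate_prefix; auto|]. split; auto.
      intros m Hm HC. apply (S3 m Hm). apply candidate_prefix; auto. lia.
    + destruct (IH ltac:(lia)) as [I1 [I2 [I3 I4]]].
      assert (CX : candidate_play (S n) ls).
      { destruct I2 as [J1 J2]. split; auto. intros k Hk Hd.
        destruct (Nat.eq_dec k n) as [->|Hkn]; [|apply J2; auto; lia].
        unfold x at 1. rewrite play_ge by (unfold L in *; lia). fold x.
        rewrite Ht by auto. unfold uniform_strat. rewrite prefix_length, I1.
        rewrite firstn_prefix by lia. reflexivity. }
      split; [|split; [exact CX|split; [lia|]]].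
      * apply least_upto_some; [apply candidate_prefix; auto; lia|lia|].
        intros m Hm HC. apply (I4 m Hm). apply candidate_prefix in HC; [|lia].
        eapply candidate_play_mono; [|exact HC]. lia.
      * intros m Hm HC. apply (I4 m Hm). eapply candidate_play_mono; [|exact HC]. lia.
Qed.

Lemma uniform_strat_favourable : favourable x.
Proof.
  destruct least_candidate_start as [ls Hs].
  assert (Cons : forall k, ls <= k -> d (prefix x k) = b ->
                   x k = local_strat (prefix x ls) (skipn ls (prefix x k))).
  { intros k Hk Hd. destruct (least_candidate_stable ls Hs (Nat.max L (S k)) ltac:(lia))
      as [_ [[_ C2] _]].
    apply C2; auto. lia. }
  assert (Wv : wins_at (prefix x ls)).
  { destruct (least_candidate_stable ls Hs L (le_n _)) as [_ [[C1 _] _]]. exact C1. }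
  set (v := prefix x ls) in *.
  (* the tail of [x] after [v] is a play of the local strategy of [v] *)
  set (t' := fun u : list bool => if list_eq_dec Bool.bool_dec u (map x (seq ls (length u)))
                                  then x (ls + length u) else local_strat v u).
  assert (Agree : forall u, d (v ++ u) = b -> t' u = local_strat v u).
  { intros u Hd. unfold t'. destruct (list_eq_dec Bool.bool_dec u (map x (seq ls (length u)))) as [E|E]; auto.
    assert (Pv : v ++ u = prefix x (ls + length u)).
    { unfold v, prefix. rewrite seq_app, map_app. f_equal. exact E. }
    rewrite Pv in Hd. rewrite (Cons (ls + length u) ltac:(lia) Hd). f_equal.
    rewrite skipn_prefix by lia. replace (ls + length u - ls) with (length u) by lia. symmetry. exact E. }
  assert (Py : forall n, x (ls + n) = play t' [] n).
  { apply (play_nil_unique t' (fun n => x (ls + n))). intros n. unfold t'. rewrite prefix_length.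
    destruct (list_eq_dec Bool.bool_dec (prefix (fun n0 : nat => x (ls + n0)) n) (map x (seq ls n)))
      as [E|E]; auto.
    exfalso. apply E. unfold prefix. rewrite (map_seq_shift x ls n). reflexivity. }
  assert (Ex : prepend v (play t' []) = x).
  { apply functional_extensionality. intros n. unfold prepend. unfold v at 1. rewrite prefix_length.
    destruct (n <? ls) eqn:En; [apply Nat.ltb_lt in En|apply Nat.ltb_ge in En].
    - unfold v. rewrite nth_prefix; auto.
    - rewrite <- Py. f_equal. unfold v. rewrite prefix_length. lia. }
  rewrite <- Ex. exact (Hlocal v Wv t' Agree).
Qed.
End Play.
End Uniform.

Theorem uniform_strategy d A b : exists sigma : list bool -> bool, forall u0, wins_at d A b u0 ->
  forall t, (forall u, d u = b -> t u = sigma u) -> favourable A b (play t u0).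
Proof.
  destruct (local_strategies d A b) as [local_strat Hlocal]. exists (uniform_strat d A b local_strat).
  intros u0 Hu0 t Ht. apply (uniform_strat_favourable d A b local_strat Hlocal t Ht u0 Hu0).
Qed.

Notation choice_node z := (repeat false z ++ [true]).
Definition entry z := repeat false z ++ [true; true].

Lemma entry_eq z : choice_node z ++ [true] = entry z ++ [].
Proof. unfold entry. rewrite app_nil_r, <- app_assoc. reflexivity. Qed.

Lemma decline_eq z : choice_node z ++ [false] = repeat false z ++ [true; false].
Proof. rewrite <- app_assoc. reflexivity. Qed.

Lemma length_entry z : length (entry z) = S (S z).
Proof. unfold entry. rewrite length_app, repeat_length. cbn. lia. Qed.

Lemma nth_zeros_app z r k : k < z -> nth k (repeat false z ++ r) false = false.
Proof. intros H. rewrite app_nth1 by (rewrite repeat_length; auto). apply nth_repeat. Qed.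

Lemma nth_zeros_app2 z r k : nth (z + k) (repeat false z ++ r) false = nth k r false.
Proof. rewrite app_nth2 by (rewrite repeat_length; lia). rewrite repeat_length. f_equal. lia. Qed.

Lemma first_true_unique (x : Cantor) z n : (forall k, k < z -> x k = false) -> x z = true ->
  (forall k, k < n -> x k = false) -> x n = true -> n = z.
Proof.
  intros H1 H2 H3 H4. destruct (Nat.lt_trichotomy n z) as [h|[h|h]]; auto.
  - rewrite H1 in H4 by auto. discriminate.
  - rewrite H3 in H2 by auto. discriminate.
Qed.

Lemma lt_pref_P1_top o : o < 3 -> lt_pref P1 2 o = false.
Proof. intros H. apply Nat.ltb_ge. lia. Qed.

Lemma lt_pref_P2_top o : lt_pref P2 0 o = false.
Proof. apply Nat.ltb_ge. lia. Qed.

Lemma lt_pref_irrefl a o : lt_pref a o o = false.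
Proof. destruct a; apply Nat.ltb_irrefl. Qed.

Section Values.
Variable xs : nat -> (list bool -> player) * (Cantor -> Prop).

Lemma val_zeros : comb_val xs (fun _ => false) = 2.
Proof. apply comb_val_2. left. auto. Qed.

Lemma val_decline_path (x : Cantor) z :
  (forall k, k < z -> x k = false) -> x z = true -> x (S z) = false -> comb_val xs x = 1.
Proof.
  intros H1 H2 H3. unfold comb_val.
  destruct (excluded_middle_informative (outcome2_set xs x)) as [HS|HS].
  - exfalso. destruct HS as [HS|[n [N1 [N2 N3]]]]; [rewrite HS in H2; discriminate|].
    assert (n = z) by (eapply first_true_unique; eauto). subst n.
    destruct N3 as [N3 _]. unfold has_prefix, prefix in N3. cbn in N3. rewrite Nat.add_0_r in N3.
    injection N3 as N3. rewrite H3 in N3. discriminate.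
  - destruct (excluded_middle_informative (outcome12_set xs x)) as [HS'|HS']; auto.
    exfalso. apply HS'. right. exists z. split; auto. split; auto. left. split; [|exact I].
    unfold has_prefix, prefix. cbn. rewrite Nat.add_0_r, H3. reflexivity.
Qed.

Lemma val_entry_path (x : Cantor) z :
  (forall k, k < z -> x k = false) -> x z = true -> x (S z) = true ->
  (subgame_set xs z (fun m => x (S (S z) + m)) -> comb_val xs x = 2) /\
  (~ subgame_set xs z (fun m => x (S (S z) + m)) -> comb_val xs x = 0).
Proof.
  intros H1 H2 H3.
  assert (Sh : (fun m => x (S (S z) + m)) = (fun n => x (S z + (1 + n))))
    by (apply functional_extensionality; intros; f_equal; lia).
  split.
  - intros HA. apply comb_val_2. right. exists z. split; auto. split; auto. split.
    + unfold has_prefix, prefix. cbn. rewrite Nat.add_0_r, H3. reflexivity.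
    + cbn [length]. rewrite <- Sh. exact HA.
  - intros HA. unfold comb_val.
    destruct (excluded_middle_informative (outcome2_set xs x)) as [HS|HS].
    { exfalso. destruct HS as [HS|[n [N1 [N2 N3]]]]; [rewrite HS in H2; discriminate|].
      assert (n = z) by (eapply first_true_unique; eauto). subst n. destruct N3 as [_ N3]. apply HA.
      cbn [length] in N3. rewrite Sh. exact N3. }
    destruct (excluded_middle_informative (outcome12_set xs x)) as [HS'|HS']; auto.
    exfalso. destruct HS' as [HS'|[n [N1 [N2 N3]]]]; [rewrite HS' in H2; discriminate|].
    assert (n = z) by (eapply first_true_unique; eauto). subst n.
    destruct N3 as [[N3 _]|[_ N3]].
    + unfold has_prefix, prefix in N3. cbn in N3. rewrite Nat.add_0_r, H3 in N3. discriminate.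
    + apply HA. cbn [length] in N3. rewrite Sh. exact N3.
Qed.

Lemma play_entry_path t z u0 :
  let x := play t (entry z ++ u0) in
  (forall k, k < z -> x k = false) /\ x z = true /\ x (S z) = true.
Proof.
  intros x. assert (L := length_entry z).
  assert (Hx : forall k, k < S (S z) -> x k = nth k (repeat false z ++ [true; true]) false).
  { intros k Hk. unfold x. rewrite play_lt by (rewrite length_app; lia).
    rewrite app_nth1 by lia. reflexivity. }
  split; [|split].
  - intros k Hk. rewrite Hx by lia. apply nth_zeros_app; auto.
  - rewrite Hx, <- (Nat.add_0_r z) at 1 by lia. apply nth_zeros_app2.
  - rewrite Hx by lia. replace (S z) with (z + 1) by lia. apply nth_zeros_app2.
Qed.

Lemma val_decline t z v : comb_val xs (play t (repeat false z ++ true :: false :: v)) = 1.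
Proof.
  assert (Hx : forall k, k < S (S z) -> play t (repeat false z ++ true :: false :: v) k =
                                     nth k (repeat false z ++ true :: false :: v) false)
    by (intros; apply play_lt; rewrite length_app, repeat_length; cbn; lia).
  apply (val_decline_path _ z).
  - intros k Hk. rewrite Hx by lia. apply nth_zeros_app; auto.
  - rewrite Hx, <- (Nat.add_0_r z) at 1 by lia. apply nth_zeros_app2.
  - rewrite Hx by lia. replace (S z) with (z + 1) by lia. apply nth_zeros_app2.
Qed.

Definition uniformly_winning (b : player) (z : nat) (tau : list bool -> bool) (u0 : list bool) :=
  forall t, (forall u, subgame_turn xs z u = b -> t u = tau u) -> favourable (subgame_set xs z) b (play t u0).

Lemma val_entry t z u0 b tau : (forall u, subgame_turn xs z u = b -> t (entry z ++ u) = tau u) ->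
  uniformly_winning b z tau u0 ->
  comb_val xs (play t (entry z ++ u0)) = match b with P1 => 2 | P2 => 0 end.
Proof.
  intros Ha HU. set (t' := fun u => t (entry z ++ u)).
  specialize (HU t' Ha).
  destruct (play_entry_path t z u0) as [B1 [B2 B3]].
  set (x := play t (entry z ++ u0)) in *.
  assert (Hsh : (fun m => x (S (S z) + m)) = play t' u0).
  { apply functional_extensionality. intros m. unfold x. rewrite play_shift. unfold prepend.
    rewrite length_entry. replace (S (S z) + m <? S (S z)) with false by (symmetry; apply Nat.ltb_ge; lia).
    f_equal. lia. }
  destruct (val_entry_path x z B1 B2 B3) as [V2a V2b]. rewrite Hsh in V2a, V2b.
  destruct b; cbn in HU; auto.
Qed.

Lemma val_entry_extreme t z u0 :
  comb_val xs (play t (entry z ++ u0)) = 0 \/ comb_val xs (play t (entry z ++ u0)) = 2.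
Proof.
  destruct (play_entry_path t z u0) as [B1 [B2 B3]].
  destruct (val_entry_path _ z B1 B2 B3) as [V2a V2b].
  destruct (classic (subgame_set xs z (fun m => play t (entry z ++ u0) (S (S z) + m)))); auto.
Qed.

Lemma val_never_choose t z : (forall n, t (repeat false n) = false) ->
  comb_val xs (play t (repeat false z)) = 2.
Proof.
  intros H. replace (play t (repeat false z)) with (fun _ : nat => false); [apply val_zeros|].
  apply functional_extensionality. apply play_unique.
  - intros n Hn. rewrite repeat_length in Hn. rewrite nth_repeat. reflexivity.
  - intros n _. replace (prefix (fun _ => false) n) with (repeat false n); [auto|].
    unfold prefix. rewrite map_const, length_seq. reflexivity.
Qed.
End Values.

Fixpoint split_zeros (w : list bool) : nat * list bool :=
  match w with false :: w' => let (z, r) := split_zeros w' in (S z, r) | _ => (0, w) end.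

Lemma split_zeros_repeat z r : (r = [] \/ exists r', r = true :: r') ->
  split_zeros (repeat false z ++ r) = (z, r).
Proof.
  intros H. induction z; cbn [repeat app split_zeros].
  - destruct H as [->|[r' ->]]; reflexivity.
  - rewrite IHz. reflexivity.
Qed.

Lemma split_zeros_spec w : w = repeat false (fst (split_zeros w)) ++ snd (split_zeros w) /\
  (snd (split_zeros w) = [] \/ exists r', snd (split_zeros w) = true :: r').
Proof.
  induction w as [|[|] w IH]; cbn [split_zeros].
  - auto.
  - cbn. split; eauto.
  - destruct (split_zeros w) as [z r]. cbn in *. destruct IH as [IH1 IH2]. split; auto.
    rewrite IH1 at 1. reflexivity.
Qed.

Lemma split_zeros_entry z u : split_zeros (entry z ++ u) = (z, true :: true :: u).
Proof. unfold entry. rewrite <- app_assoc. apply split_zeros_repeat. right; eauto. Qed.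

Lemma comb_turn_entry ds z u : comb_turn ds 0 (entry z ++ u) = ds z u.
Proof. unfold entry. rewrite <- app_assoc, comb_turn_zeros. reflexivity. Qed.
Lemma comb_turn_zeros_P1 ds z : comb_turn ds 0 (repeat false z) = P1.
Proof. rewrite <- (app_nil_r (repeat false z)), comb_turn_zeros. reflexivity. Qed.
Lemma comb_turn_choice ds z : comb_turn ds 0 (choice_node z) = P1.
Proof. rewrite comb_turn_zeros. reflexivity. Qed.

Section Equilibrium.
Variable xs : nat -> (list bool -> player) * (Cantor -> Prop).
Hypothesis Hdet : forall z u,
  wins_at (subgame_turn xs z) (subgame_set xs z) P1 u \/ wins_at (subgame_turn xs z) (subgame_set xs z) P2 u.
Variable T : player -> nat -> list bool -> bool.
Hypothesis HT : forall b z u0,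
  wins_at (subgame_turn xs z) (subgame_set xs z) b u0 -> uniformly_winning xs b z (T b z) u0.

Definition P1_wins z := has_win (subgame_turn xs z) (subgame_set xs z) P1.

Definition spe_strat (w : list bool) : bool :=
  let (z, r) := split_zeros w in
  match r with
  | [true] => if excluded_middle_informative (P1_wins z) then true else false
  | true :: true :: u => T (subgame_turn xs z u) z u
  | _ => false
  end.

Lemma spe_strat_zeros n : spe_strat (repeat false n) = false.
Proof. unfold spe_strat. rewrite <- (app_nil_r (repeat false n)), split_zeros_repeat by auto. reflexivity. Qed.

Lemma spe_strat_choice z :
  spe_strat (choice_node z) = if excluded_middle_informative (P1_wins z) then true else false.
Proof. unfold spe_strat. rewrite split_zeros_repeat by (right; eauto). reflexivity. Qed.

Lemma spe_strat_entry z u : spe_strat (entry z ++ u) = T (subgame_turn xs z u) z u.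
Proof. unfold spe_strat. rewrite split_zeros_entry. reflexivity. Qed.

Definition deviation (a : player) (s' : list bool -> bool) :=
  forall w, g_turn (comb_game xs) w <> a -> s' w = spe_strat w.

Lemma deviation_agrees a s' (Hs' : deviation a s') b :
  b <> a -> forall w, comb_turn (subgame_turn xs) 0 w = b -> s' w = spe_strat w.
Proof. intros Hb w Hw. apply Hs'. cbn. congruence. Qed.

Lemma deviation_in_subgame a s' (Hs' : deviation a s') b z : b <> a ->
  forall u, subgame_turn xs z u = b -> s' (entry z ++ u) = T b z u.
Proof.
  intros Hb u Hu. rewrite (deviation_agrees _ _ Hs' b Hb) by (rewrite comb_turn_entry; auto).
  rewrite spe_strat_entry, Hu. reflexivity.
Qed.

Lemma val_spe_in_subgame z u0 b : wins_at (subgame_turn xs z) (subgame_set xs z) b u0 ->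
  comb_val xs (play spe_strat (entry z ++ u0)) = match b with P1 => 2 | P2 => 0 end.
Proof.
  intros W. apply (val_entry xs _ _ _ _ (T b z)); [|apply HT; auto].
  intros u Hu. rewrite spe_strat_entry, Hu. reflexivity.
Qed.

Lemma val_deviation_in_subgame a s' (Hs' : deviation a s') z u0 b :
  b <> a -> wins_at (subgame_turn xs z) (subgame_set xs z) b u0 ->
  comb_val xs (play s' (entry z ++ u0)) = match b with P1 => 2 | P2 => 0 end.
Proof.
  intros Hb W. apply (val_entry xs _ _ _ _ (T b z)); [apply (deviation_in_subgame _ _ Hs')|apply HT]; auto.
Qed.

Lemma NE_at_zeros a s' (Hs' : deviation a s') z :
  lt_pref a (comb_val xs (play spe_strat (repeat false z))) (comb_val xs (play s' (repeat false z))) = false.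
Proof.
  rewrite (val_never_choose xs spe_strat z spe_strat_zeros).
  destruct a; [apply lt_pref_P1_top, comb_val_lt|].
  rewrite (val_never_choose xs s' z); [reflexivity|]. intros n.
  rewrite (deviation_agrees _ _ Hs' P1) by (try discriminate; apply comb_turn_zeros_P1). apply spe_strat_zeros.
Qed.

Lemma NE_at_choice a s' (Hs' : deviation a s') z :
  lt_pref a (comb_val xs (play spe_strat (choice_node z))) (comb_val xs (play s' (choice_node z))) = false.
Proof.
  rewrite (play_step spe_strat), spe_strat_choice.
  destruct (excluded_middle_informative (P1_wins z)) as [W1|W1].
  - rewrite entry_eq, (val_spe_in_subgame z [] P1) by (apply wins_at_nil; auto).
    destruct a; [apply lt_pref_P1_top, comb_val_lt|].
    rewrite (play_step s'), (deviation_agrees _ _ Hs' P1) by (try discriminate; apply comb_turn_choice).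
    rewrite spe_strat_choice. destruct (excluded_middle_informative _); [|contradiction].
    rewrite entry_eq, (val_deviation_in_subgame _ _ Hs' z [] P1); [reflexivity|discriminate|].
    apply wins_at_nil; auto.
  - assert (W2 : wins_at (subgame_turn xs z) (subgame_set xs z) P2 []).
    { destruct (Hdet z []) as [[sg H]|H]; auto. exfalso. apply W1. exists sg.
      intros t Ht. specialize (H t Ht). unfold unrescale in H. rewrite prepend_nil in H. exact H. }
    rewrite decline_eq, val_decline. rewrite (play_step s').
    destruct a.
    + destruct (s' (choice_node z)).
      * rewrite entry_eq, (val_deviation_in_subgame _ _ Hs' z [] P2); [reflexivity|discriminate|auto].
      * rewrite decline_eq, val_decline. reflexivity.
    + rewrite (deviation_agrees _ _ Hs' P1) by (try discriminate; apply comb_turn_choice).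
      rewrite spe_strat_choice. destruct (excluded_middle_informative _); [contradiction|].
      rewrite decline_eq, val_decline. reflexivity.
Qed.

Lemma NE_in_subgame a s' (Hs' : deviation a s') z v :
  lt_pref a (comb_val xs (play spe_strat (entry z ++ v))) (comb_val xs (play s' (entry z ++ v))) = false.
Proof.
  destruct (Hdet z v) as [W|W]; rewrite (val_spe_in_subgame z v _ W).
  - destruct a; [apply lt_pref_P1_top, comb_val_lt|].
    rewrite (val_deviation_in_subgame _ _ Hs' z v P1); [reflexivity|discriminate|auto].
  - destruct a; [|apply lt_pref_P2_top].
    rewrite (val_deviation_in_subgame _ _ Hs' z v P2); [reflexivity|discriminate|auto].
Qed.

Theorem spe_strat_SPE : is_SPE (comb_game xs) spe_strat.
Proof.
  intros h a s' Hs'. cbn [comb_game g_val g_pref].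
  destruct (split_zeros_spec h) as [Eh Hr]. destruct (split_zeros h) as [z r]. cbn [fst snd] in *.
  subst h. destruct Hr as [->|[r' ->]].
  - rewrite app_nil_r. apply (NE_at_zeros a s' Hs').
  - destruct r' as [|[|] v].
    + apply (NE_at_choice a s' Hs').
    + replace (repeat false z ++ true :: true :: v) with (entry z ++ v)
        by (unfold entry; rewrite <- app_assoc; reflexivity).
      apply (NE_in_subgame a s' Hs').
    + rewrite !val_decline. apply lt_pref_irrefl.
Qed.
End Equilibrium.

Lemma SPE_exists xs
  (Hdet : forall z u, wins_at (subgame_turn xs z) (subgame_set xs z) P1 u \/
                      wins_at (subgame_turn xs z) (subgame_set xs z) P2 u) :
  exists s, is_SPE (comb_game xs) s.
Proof.
  assert (H : forall bz : player * nat, exists tau, forall u0,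
     wins_at (subgame_turn xs (snd bz)) (subgame_set xs (snd bz)) (fst bz) u0 ->
     uniformly_winning xs (fst bz) (snd bz) tau u0).
  { intros [b z]. destruct (uniform_strategy (subgame_turn xs z) (subgame_set xs z) b) as [tau Ht].
    exists tau. exact Ht. }
  destruct (functional_choice _ H) as [T HT].
  exists (spe_strat xs (fun b z => T (b, z))).
  apply spe_strat_SPE; auto. intros b z u0. apply (HT (b, z)).
Qed.

Definition player_eqb (a b : player) : bool :=
  match a, b with P1, P1 | P2, P2 => true | _, _ => false end.

Lemma player_eqb_eq a b : player_eqb a b = true <-> a = b.
Proof. destruct a, b; cbn; split; congruence. Qed.

Section ReadOff.
Variable xs : nat -> (list bool -> player) * (Cantor -> Prop).
Variable s : list bool -> bool.
Hypothesis Hs : is_SPE (comb_game xs) s.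

Definition deviate_in (z : nat) (b : player) (sg : list bool -> bool) (w : list bool) : bool :=
  let (z', r) := split_zeros w in
  match r with
  | true :: true :: u => if andb (z' =? z) (player_eqb (subgame_turn xs z u) b) then sg u else s w
  | _ => s w
  end.

Lemma deviate_in_agree z b sg w : comb_turn (subgame_turn xs) 0 w <> b -> deviate_in z b sg w = s w.
Proof.
  intros Hw. unfold deviate_in. destruct (split_zeros_spec w) as [Ew _].
  destruct (split_zeros w) as [z' r]. cbn [fst snd] in Ew. destruct r as [|[|] [|[|] u]]; auto.
  destruct (andb (z' =? z) (player_eqb (subgame_turn xs z u) b)) eqn:E; auto.
  apply andb_prop in E. destruct E as [E1 E2]. apply Nat.eqb_eq in E1. apply player_eqb_eq in E2.
  subst z' b. exfalso. apply Hw. rewrite Ew.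
  replace (repeat false z ++ true :: true :: u) with (entry z ++ u)
    by (unfold entry; rewrite <- app_assoc; reflexivity).
  apply comb_turn_entry.
Qed.

Lemma deviate_in_region z b sg u : subgame_turn xs z u = b -> deviate_in z b sg (entry z ++ u) = sg u.
Proof.
  intros H. unfold deviate_in. rewrite split_zeros_entry, Nat.eqb_refl. subst b.
  destruct (subgame_turn xs z u); reflexivity.
Qed.

Lemma deviate_in_choice z b sg : deviate_in z b sg (choice_node z) = s (choice_node z).
Proof. unfold deviate_in. rewrite split_zeros_repeat by (right; eauto). reflexivity. Qed.

Lemma uniformly_winning_root z b sg :
  (forall t, (forall w, subgame_turn xs z w = b -> t w = sg w) ->
     match b with P1 => subgame_set xs z (play t []) | P2 => ~ subgame_set xs z (play t []) end) ->
  uniformly_winning xs b z sg [].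
Proof. intros H t Ht. specialize (H t Ht). unfold favourable. destruct b; exact H. Qed.

Lemma override_eq (s0 : list bool -> bool) h c :
  (fun w => if list_eq_dec Bool.bool_dec w h then c else s0 w) h = c.
Proof. cbn beta. destruct (list_eq_dec Bool.bool_dec h h) as [_|n]; [reflexivity|contradiction]. Qed.

(** Declining would let player 1 improve from 1 to 2 by entering and winning. *)
Lemma spe_enters_if_P1_wins z : has_win (subgame_turn xs z) (subgame_set xs z) P1 ->
  s (choice_node z) = true.
Proof.
  intros [sg Hsg]. destruct (s (choice_node z)) eqn:E; auto. exfalso.
  set (s' := fun w => if list_eq_dec Bool.bool_dec w (choice_node z) then true else deviate_in z P1 sg w).
  assert (Ag : forall w, g_turn (comb_game xs) w <> P1 -> s' w = s w).
  { intros w Hw. unfold s'. destruct (list_eq_dec Bool.bool_dec w (choice_node z)) as [->|].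
    - exfalso. apply Hw. apply comb_turn_choice.
    - apply deviate_in_agree. exact Hw. }
  specialize (Hs (choice_node z) P1 s' Ag). cbn [comb_game g_val g_pref lt_pref] in Hs.
  rewrite (play_step s), E, decline_eq, val_decline, (play_step s') in Hs.
  unfold s' in Hs at 2. rewrite override_eq, entry_eq in Hs.
  rewrite (val_entry xs s' z [] P1 sg) in Hs; [discriminate| |apply uniformly_winning_root; exact Hsg].
  intros u Hu. unfold s'. destruct (list_eq_dec Bool.bool_dec (entry z ++ u) (choice_node z)) as [e|e].
  - exfalso. apply (f_equal (@length bool)) in e.
    rewrite length_app, length_entry, length_app, repeat_length in e. cbn in e. lia.
  - apply deviate_in_region. auto.
Qed.

(** Entering yields 0 or 2; with 2 player 2 could improve by winning, with 0
    player 1 could improve to 1 by declining. *)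
Lemma spe_declines_if_P2_wins z : has_win (subgame_turn xs z) (subgame_set xs z) P2 ->
  s (choice_node z) = false.
Proof.
  intros [sg Hsg]. destruct (s (choice_node z)) eqn:E; auto. exfalso.
  assert (Hp : play s (choice_node z) = play s (entry z ++ []))
    by (rewrite (play_step s), E, entry_eq; reflexivity).
  destruct (val_entry_extreme xs s z []) as [V|V].
  - set (s' := fun w => if list_eq_dec Bool.bool_dec w (choice_node z) then false else s w).
    assert (Ag : forall w, g_turn (comb_game xs) w <> P1 -> s' w = s w).
    { intros w Hw. unfold s'. destruct (list_eq_dec Bool.bool_dec w (choice_node z)) as [->|]; auto.
      exfalso. apply Hw. apply comb_turn_choice. }
    specialize (Hs (choice_node z) P1 s' Ag). cbn [comb_game g_val g_pref lt_pref] in Hs.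
    rewrite Hp, V, (play_step s') in Hs. unfold s' in Hs at 2.
    rewrite override_eq, decline_eq, val_decline in Hs. discriminate.
  - set (s' := deviate_in z P2 sg).
    assert (Ag : forall w, g_turn (comb_game xs) w <> P2 -> s' w = s w)
      by (intros; apply deviate_in_agree; auto).
    specialize (Hs (choice_node z) P2 s' Ag). cbn [comb_game g_val g_pref lt_pref] in Hs.
    rewrite Hp, V, (play_step s') in Hs. unfold s' in Hs at 2.
    rewrite deviate_in_choice, E, entry_eq in Hs.
    rewrite (val_entry xs s' z [] P2 sg) in Hs; [discriminate| |apply uniformly_winning_root; exact Hsg].
    intros u Hu. apply deviate_in_region. auto.
Qed.
End ReadOff.

Definition sel_parity : Prog := Pcomp Pfst (Pcomp Pparity_half Psnd).
Definition sel_half : Prog := Pcomp Psnd (Pcomp Pparity_half Psnd).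

Lemma sel_parity_fn n m : fn sel_parity (to_nat (n, m)) = if Nat.even m then 0 else 1.
Proof. unfold sel_parity. cbn [fn Pcomp Pfst Psnd Pparity_half Pext]. simpof. reflexivity. Qed.
Lemma sel_half_fn n m : fn sel_half (to_nat (n, m)) = Nat.div2 m.
Proof. unfold sel_half. cbn [fn Pcomp Pfst Psnd Pparity_half Pext]. simpof. reflexivity. Qed.

(** Closed names of the empty set (index 0) and of Cantor space (index 1). *)
Definition sel_empty_full : Prog := Ppair Pzero (Pif Pfst Pzero (Pconst 1)).
Lemma selected_empty_full p i m : selected sel_empty_full p i m = if i =? 0 then 1 else 0.
Proof.
  unfold selected, select_entry, sel_empty_full. cbn [fn Ppair Pzero Pconst]. rewrite Pif_fn.
  cbn [fn Pfst Pzero Pconst]. simpof. destruct i; reflexivity.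
Qed.

Definition code_1 := wcode [true].
Definition code_0 := wcode [false].

(** The arguments of the rescaling machine producing [1 A_n]. *)
Definition sel_rescale_games : Prog :=
  Pif sel_parity (Ppair (Pconst 1) (Ppair Pfst (Ppair (Pconst 1) sel_half))) (Ppair Pzero (Pconst code_1)).
Lemma selected_rescale_games p n m :
  selected sel_rescale_games p n m = pairB (cst code_1) (projB 1 (projB n p)) m.
Proof.
  unfold selected, select_entry, sel_rescale_games, pairB, projB, cst. rewrite Pif_fn, sel_parity_fn.
  destruct (Nat.even m); cbn [Nat.eqb fn Ppair Pzero Pconst Pfst]; rewrite ?sel_half_fn; simpof; reflexivity.
Qed.

(** The arguments of the rescaling machine producing [0 2^N] from [Y (1, _)]. *)
Definition sel_rescale_full : Prog :=
  Pif sel_parity (Ppair (Pconst 1) (Ppair (Pconst 1) sel_half)) (Ppair Pzero (Pconst code_0)).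
Lemma selected_rescale_full Y i m :
  selected sel_rescale_full Y i m = pairB (cst code_0) (fun j => Y (to_nat (1, j))) m.
Proof.
  unfold selected, select_entry, sel_rescale_full, pairB, cst. rewrite Pif_fn, sel_parity_fn.
  destruct (Nat.even m); cbn [Nat.eqb fn Ppair Pzero Pconst Pfst]; rewrite ?sel_half_fn; simpof; reflexivity.
Qed.

(** The arguments of the union machine producing [0 2^N u 1 A_n]. *)
Definition sel_unions : Prog :=
  Pif sel_parity (Ppair (Pconst 1) (Ppair (Pconst 1) (Ppair Pfst sel_half)))
                 (Ppair (Pconst 1) (Ppair Pzero sel_half)).
Lemma selected_unions Y n m : selected sel_unions Y n m =
  pairB (fun j => Y (to_nat (0, j))) (fun j => Y (to_nat (1, to_nat (n, j)))) m.
Proof.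
  unfold selected, select_entry, sel_unions, pairB. rewrite Pif_fn, sel_parity_fn.
  destruct (Nat.even m); cbn [Nat.eqb fn Ppair Pzero Pconst Pfst]; rewrite ?sel_half_fn; simpof; reflexivity.
Qed.

Fixpoint tab (v : nat) (l : list (nat * nat)) (d : nat) : nat :=
  match l with [] => d | (k, r) :: l' => if v =? k then r else tab v l' d end.
Fixpoint Ptab (x : Prog) (l : list (nat * nat)) (d : nat) : Prog :=
  match l with [] => Pconst d | (k, r) :: l' => Pif (Peqb x (Pconst k)) (Pconst r) (Ptab x l' d) end.
Lemma Ptab_fn x l d y : fn (Ptab x l d) y = tab (fn x y) l d.
Proof.
  induction l as [|[k r] l IH]; [reflexivity|]. cbn [Ptab tab]. rewrite Pif_fn, Peqb_fn, IH.
  cbn [fn Pconst]. destruct (fn x y =? k); reflexivity.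
Qed.

Lemma zeros_prefix_decomp (w : list bool) :
  exists z w1, w = repeat false z ++ w1 /\ (w1 = [] \/ exists w2, w1 = true :: w2).
Proof.
  induction w as [|b w IH].
  - exists 0, []. auto.
  - destruct IH as [z [w1 [E H]]]. destruct b.
    + exists 0, (true :: w). eauto.
    + exists (S z), w1. rewrite E. auto.
Qed.

(** The state [(n, c)] strips a leading [0] from the code [c], counting in [n]. *)
Definition leading_zeros_step : Prog :=
  let st := Psnd in
  let n := Pcomp Pfst st in
  let cur := Pcomp Psnd st in
  Pif cur (Pif (Pcomp Phdc cur) st (Ppair (Psucc_of n) (Pcomp Ptlc cur))) st.
Definition Pleading_zeros : Prog := Pcomp (Piter (Ppair Pzero Pid) leading_zeros_step) (Ppair Pid Pid).

Lemma lcode_ge l : length l <= lcode l.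
Proof. induction l; cbn [length lcode]; [lia|]. pose proof (to_nat_non_decreasing a (lcode l)). lia. Qed.

Lemma iter_fix {A} (f : A -> A) s n : f s = s -> Nat.iter n f s = s.
Proof. intros H; induction n; [reflexivity|]. rewrite Nat.iter_succ, IHn. exact H. Qed.

Lemma leading_zeros_step_arg a s : fn leading_zeros_step (to_nat (a, s)) = fn leading_zeros_step (to_nat (0, s)).
Proof. unfold leading_zeros_step. rewrite !Pif_fn. cbn [fn Pcomp Psnd Pfst Ppair Psucc_of]. simpof. reflexivity. Qed.

Lemma leading_zeros_fix l n : (l = [] \/ exists x l', l = x :: l' /\ x <> 0) ->
  fn leading_zeros_step (to_nat (0, to_nat (n, lcode l))) = to_nat (n, lcode l).
Proof.
  intros Hl. unfold leading_zeros_step. rewrite Pif_fn. cbn [fn Pcomp Psnd Pfst]. simpof.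
  destruct Hl as [->|[x [l' [-> Hx]]]]; [reflexivity|].
  cbn [lcode Nat.eqb]. rewrite Pif_fn. cbn [fn Pcomp Psnd Phdc Pext]. simpof. cbn [hdc]. simpof.
  destruct x; [lia|]. reflexivity.
Qed.

Lemma leading_zeros_iter z l n f : (l = [] \/ exists x l', l = x :: l' /\ x <> 0) -> z <= f ->
  Nat.iter f (fun s => fn leading_zeros_step (to_nat (0, s))) (to_nat (n, lcode (repeat 0 z ++ l))) =
  to_nat (n + z, lcode l).
Proof.
  intros Hl. revert z n. induction f; intros z n Hz.
  - assert (z = 0) by lia. subst. rewrite Nat.add_0_r. reflexivity.
  - rewrite Nat.iter_succ_r. destruct z as [|z].
    + cbn [repeat app]. rewrite Nat.add_0_r, (leading_zeros_fix _ _ Hl).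
      apply iter_fix. apply leading_zeros_fix; auto.
    + cbn [repeat app].
      assert (Fx : fn leading_zeros_step (to_nat (0, to_nat (n, lcode (0 :: repeat 0 z ++ l)))) =
                   to_nat (S n, lcode (repeat 0 z ++ l))).
      { unfold leading_zeros_step. cbn [lcode].
        rewrite Pif_fn. cbn [fn Pcomp Psnd Pfst]. simpof. cbn [Nat.eqb].
        rewrite Pif_fn. cbn [fn Pcomp Psnd Pfst Phdc Ptlc Pext Ppair Psucc_of]. simpof. cbn [hdc tlc].
        simpof. reflexivity. }
      rewrite Fx, IHf by lia. f_equal. f_equal. lia.
Qed.

Lemma wcode_app_zeros z w : wcode (repeat false z ++ w) = lcode (repeat 0 z ++ map Nat.b2n w).
Proof. unfold wcode. rewrite map_app, map_repeat. reflexivity. Qed.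

Lemma wcode_len w : length w <= wcode w.
Proof. unfold wcode. pose proof (lcode_ge (map Nat.b2n w)). rewrite length_map in H. exact H. Qed.

Lemma Pleading_zeros_fn z w1 : (w1 = [] \/ exists w2, w1 = true :: w2) ->
  fn Pleading_zeros (wcode (repeat false z ++ w1)) = to_nat (z, lcode (map Nat.b2n w1)).
Proof.
  intros Hw1. unfold Pleading_zeros. cbn [fn Pcomp Piter Ppair Pzero Pid]. unfold iter_pair_fn. simpof.
  rewrite (iter_ext _ (fun s => fn leading_zeros_step (to_nat (0, s)))) by (intros; apply leading_zeros_step_arg).
  rewrite wcode_app_zeros at 2. rewrite leading_zeros_iter; [reflexivity| |].
  - destruct Hw1 as [->|[w2 ->]]; [left; reflexivity|right]. eexists _, _. split; [reflexivity|]. cbn; lia.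
  - pose proof (wcode_len (repeat false z ++ w1)). rewrite length_app, repeat_length in H. lia.
Qed.

(** [decode_tagged v g] reads an entry [(tag, val)] as [Pselect] does, on the oracle [g]. *)
Definition decode_tagged (v : nat) (g : nat -> nat) :=
  let (tag, val) := of_nat v in if tag =? 0 then val else g val.

(** The turn function of the combined game, reading the turn functions of the
    games from the oracle at [(0, (n, (0, _)))]. *)
Definition Pcomb_turn : Prog :=
  let st := Pleading_zeros in
  let n := Pcomp Pfst st in
  let cur := Pcomp Psnd st in
  let t1 := Pcomp Ptlc cur in
  let P1code := Ppair Pzero Pzero in
  Pif cur (Pif (Peqb (Pcomp Phdc cur) (Pconst 1))
             (Pif t1 (Pif (Peqb (Pcomp Phdc t1) (Pconst 1))
                 (Ppair (Pconst 1) (Ppair Pzero (Ppair n (Ppair Pzero (Pcomp Ptlc t1))))) P1code)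
                 P1code) P1code) P1code.

Lemma Pcomb_turn_spec ds (g : nat -> nat) w :
  (forall n w', g (to_nat (0, to_nat (n, to_nat (0, wcode w')))) = player_code (ds n w')) ->
  decode_tagged (fn Pcomb_turn (wcode w)) g = player_code (comb_turn ds 0 w).
Proof.
  intros Hg. destruct (zeros_prefix_decomp w) as [z [w1 [-> Hw1]]].
  rewrite comb_turn_zeros. cbn [Nat.add].
  unfold Pcomb_turn. repeat (first [rewrite Pif_fn | rewrite Peqb_fn]).
  cbn [fn Pcomp Psnd Pfst Pconst Ppair Pzero Phdc Ptlc Pext]. rewrite ?(Pleading_zeros_fn z w1 Hw1). simpof.
  assert (NZ : forall a l, (lcode (a :: l) =? 0) = false) by reflexivity.
  destruct Hw1 as [->|[w2 ->]].
  - cbn [map lcode Nat.eqb]. unfold decode_tagged. simpof. reflexivity.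
  - cbn [map]. rewrite NZ, hdc_lcode, tlc_lcode. cbn [Nat.b2n Nat.eqb].
    destruct w2 as [|b w3].
    + cbn [map lcode Nat.eqb]. unfold decode_tagged. simpof. reflexivity.
    + cbn [map]. rewrite NZ, hdc_lcode, tlc_lcode.
      destruct b; cbn [Nat.b2n Nat.eqb]; unfold decode_tagged; simpof; cbn [Nat.eqb comb_turn]; [|reflexivity].
      rewrite <- Hg. reflexivity.
Qed.

(** The name of the combined game, read from an oracle [Z] with [Z (0, _)] the
    name of the input and [Z (1, (i2, (i3, _)))] the names of the empty set
    ([i2 = i3 = 0]), of Cantor space ([i2 = 0, i3 = 1]) and of the sets of
    outcome [>= 2] ([i2 = 1, i3 = 0]) and [>= 1] ([i2 = i3 = 1]). *)
Definition gd_header : Prog := Ppair Pzero (Ptab Psnd [(0,2);(1,3)] 0).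
Definition gd_turn : Prog := Pcomp Pcomb_turn Psnd.
Definition gd_pref : Prog :=
  let a := Pcomp Pfst Psnd in let o := Pcomp Pfst (Pcomp Psnd Psnd) in
  let o' := Pcomp Psnd (Pcomp Psnd Psnd) in
  Ppair Pzero (Pif a (Pltb o' o) (Pltb o o')).

(** Upper sets [u] of player [a] are keyed by [(a, u)]: for player 2, [{0}] and
    [{0, 1}] are named as complements, of the sets of outcome [>= 1] and [>= 2]. *)
Definition complement_tag_table := [(to_nat (1,1),1); (to_nat (1,3),1)].
(** The source [2 i2 + i3] of the name of each upper set; [0] (the empty set) by default. *)
Definition name_source_table :=
  [(to_nat (0,4),2); (to_nat (0,6),3); (to_nat (0,7),1); (to_nat (1,1),3); (to_nat (1,3),2); (to_nat (1,7),1)].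

Definition gd_names : Prog :=
  let t := Pcomp Pfst Psnd in let j' := Pcomp Psnd Psnd in
  let src := Ptab t name_source_table 0 in
  Pif j' (Ppair (Pconst 1) (Ppair (Pconst 1) (Ppair (Pcomp Psnd (Pcomp Pparity_half src))
             (Ppair (Pcomp Pfst (Pcomp Pparity_half src)) (Ppred j')))))
         (Ppair Pzero (Ptab t complement_tag_table 0)).

Definition game_data : Prog :=
  Pif (Peqb Pfst (Pconst 0)) gd_header (Pif (Peqb Pfst (Pconst 1)) gd_turn
   (Pif (Peqb Pfst (Pconst 2)) gd_pref (Pif (Peqb Pfst (Pconst 3)) gd_names (Ppair Pzero Pzero)))).
Definition Pgame_data : Prog := Pcomp game_data Psnd.

Lemma selected_game_data Z i m : selected Pgame_data Z i m = decode_tagged (fn game_data m) Z.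
Proof. unfold selected, select_entry, decode_tagged, Pgame_data. cbn [fn Pcomp Psnd]. simpof. reflexivity. Qed.

Ltac game_data_case :=
  unfold game_data; rewrite ?Pif_fn, ?Peqb_fn; cbn [fn Pconst Pfst Psnd]; simpof; cbn [Nat.eqb].

Lemma game_data_header Z j :
  decode_tagged (fn game_data (to_nat (0, j))) Z = if j =? 0 then 2 else if j =? 1 then 3 else 0.
Proof.
  game_data_case. unfold gd_header. cbn [fn Ppair Pzero]. rewrite Ptab_fn. cbn [fn Psnd].
  unfold decode_tagged. simpof. cbn [Nat.eqb]. destruct j as [|[|j]]; reflexivity.
Qed.

Lemma game_data_turn Z ds w :
  (forall n w', Z (to_nat (0, to_nat (n, to_nat (0, wcode w')))) = player_code (ds n w')) ->
  decode_tagged (fn game_data (to_nat (1, wcode w))) Z = player_code (comb_turn ds 0 w).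
Proof. intros H. game_data_case. unfold gd_turn. cbn [fn Pcomp Psnd]. simpof. apply Pcomb_turn_spec, H. Qed.

Lemma game_data_pref Z a o o' : decode_tagged (fn game_data (to_nat (2, to_nat (a, to_nat (o, o'))))) Z =
  if a =? 0 then Nat.b2n (o <? o') else Nat.b2n (o' <? o).
Proof.
  game_data_case. unfold gd_pref. cbn [fn Ppair Pzero]. rewrite Pif_fn, !Pltb_fn.
  cbn [fn Pcomp Psnd Pfst]. simpof. unfold decode_tagged. simpof. cbn [Nat.eqb]. destruct a; reflexivity.
Qed.

Lemma game_data_name_tag Z t :
  decode_tagged (fn game_data (to_nat (3, to_nat (t, 0)))) Z = tab t complement_tag_table 0.
Proof.
  game_data_case. unfold gd_names. rewrite Pif_fn. cbn [fn Pcomp Psnd Pfst]. simpof. cbn [Nat.eqb].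
  cbn [fn Ppair Pzero]. rewrite Ptab_fn. cbn [fn Pcomp Psnd Pfst]. simpof. unfold decode_tagged. simpof.
  reflexivity.
Qed.

Lemma game_data_name_body Z t y : decode_tagged (fn game_data (to_nat (3, to_nat (t, S y)))) Z =
  let s := tab t name_source_table 0 in
  Z (to_nat (1, to_nat (Nat.div2 s, to_nat (if Nat.even s then 0 else 1, y)))).
Proof.
  game_data_case. unfold gd_names. rewrite Pif_fn. cbn [fn Pcomp Psnd Pfst]. simpof. cbn [Nat.eqb].
  cbn [fn Ppair Pzero Pconst Pcomp Pparity_half Pext Ppred Psnd Pfst]. rewrite Ptab_fn.
  cbn [fn Pcomp Psnd Pfst]. simpof. unfold decode_tagged. simpof. reflexivity.
Qed.

Definition Pchoice_code : Prog :=
  Pcomp (Piter (Pconst (lcode [1])) (Psucc_of (Ppair Pzero Psnd))) (Ppair Pzero Pid).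

Lemma Pchoice_code_fn i : fn Pchoice_code i = wcode (choice_node i).
Proof.
  unfold Pchoice_code. cbn [fn Pcomp Ppair Pzero Pid Piter]. unfold iter_pair_fn. simpof.
  induction i; [reflexivity|]. rewrite Nat.iter_succ, IHi. cbn [fn Psucc_of Ppair Pzero Psnd]. simpof.
  reflexivity.
Qed.

(** On the oracle [pairB p s], entry [(i, _)] is the move of [s] at [0^i 1]. *)
Definition sel_choices : Prog :=
  let c := Pcomp Pchoice_code (Pcomp Pfst Psnd) in
  Ppair (Pconst 1) (Psucc_of (Padd c c)).

Lemma selected_choices p s i m :
  selected sel_choices (pairB p s) i m = s (wcode (choice_node (fst (of_nat m)))).
Proof.
  unfold selected, select_entry, sel_choices. cbn [fn Ppair Pconst Psucc_of Padd Pcomp Psnd Pfst].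
  simpof. cbn [Nat.eqb snd]. rewrite Pchoice_code_fn. unfold pairB. set (c := wcode _).
  replace (S (c + c)) with (1 + 2 * c) by lia.
  rewrite Nat.even_add_mul_2, Nat.div2_succ_double. reflexivity.
Qed.

(** Move [1] is player 1 (code [0]), move [0] is player 2 (code [1]). *)
Definition Pchoice_player : Prog := Pifz (Pconst 1) Pzero (Peqb Pid (Pconst 1)).

Lemma Pchoice_player_fn v : fn Pchoice_player v = if v =? 1 then 0 else 1.
Proof.
  unfold Pchoice_player. cbn [fn Pifz Pconst Pzero]. rewrite Peqb_fn. cbn [fn Pid Pconst].
  destruct (v =? 1); reflexivity.
Qed.

Definition reduction_K : prf := Prun (code (Pmap Pchoice_player)) (Pselect sel_choices) Pindex0.

Lemma reduction_K_ok p s : computes reduction_K (pairB p s)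
  (fun m => if s (wcode (choice_node (fst (of_nat m)))) =? 1 then 0 else 1).
Proof.
  eapply computes_ext.
  - apply (Prun_select_ok _ sel_choices Pindex0 (pairB p s)
             (fun i m => fn Pchoice_player (selected sel_choices (pairB p s) i m))).
    intros i. apply Pmap_ok.
  - intros m. cbn [fn Pindex0 Ppair Pzero Pid]. simpof. rewrite selected_choices, Pchoice_player_fn. reflexivity.
Qed.

Section Machines.
Variables e_cl e_resc e_un e_zo : prf.
Definition m_empty_full := Prun e_cl (Pselect sel_empty_full) Pid.
Definition m_rescaled_games := Prun e_resc (Pselect sel_rescale_games) Pid.
Definition m_outcome2 := Pseq m_rescaled_games e_zo.
Definition m_rescaled_full := Pseq m_empty_full (Prun e_resc (Pselect sel_rescale_full) Pindex0).
Definition m_union_args := Pjoin m_rescaled_full m_rescaled_games.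
Definition m_unions := Pseq m_union_args (Prun e_un (Pselect sel_unions) Pid).
Definition m_outcome12 := Pseq m_unions e_zo.
Definition m_game_inputs := Pjoin (code Pcopy) (Pjoin m_empty_full (Pjoin m_outcome2 m_outcome12)).
Definition reduction_H := Pseq m_game_inputs (Prun (code Pcopy) (Pselect Pgame_data) Pindex0).
End Machines.

Definition game_inputs (p EFs W M : Baire) : Baire := fun n =>
  let (i, j) := of_nat n in if i =? 0 then p j else
  let (i2, j2) := of_nat j in if i2 =? 0 then EFs j2 else
  let (i3, j3) := of_nat j2 in if i3 =? 0 then W j3 else M j3.

Definition Empty : Cantor -> Prop := fun _ => False.
Definition Full : Cantor -> Prop := fun _ => True.

Section Names.
Variable nm1 : pcrep.
Variables e_cl e_resc e_un e_zo : prf.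
Hypothesis Hcl : forall p A, closed_name p A -> exists q, computes e_cl p q /\ nm1 q A.
Hypothesis Hresc : forall w p A, nm1 p A ->
  exists q, computes e_resc (pairB (cst (wcode w)) p) q /\ nm1 q (rescale w A).
Hypothesis Hun : forall p q A B, nm1 p A -> nm1 q B ->
  exists r, computes e_un (pairB p q) r /\ nm1 r (fun x => A x \/ B x).
Hypothesis Hzo : forall ps As, (forall n, nm1 (ps n) (As n)) ->
  exists r, computes e_zo (tupleB ps) r /\ nm1 r (zero_op As).

Variable p : Baire.
Variable xs : nat -> (list bool -> player) * (Cantor -> Prop).
Hypothesis Hv : hat_rep (win_rep nm1) p xs.

Lemma names_empty_full : exists EF : nat -> Baire,
  computes (m_empty_full e_cl) p (tupleB EF) /\ nm1 (EF 0) Empty /\ nm1 (EF 1) Full.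
Proof.
  assert (HEF : forall i, exists q, computes e_cl (selected sel_empty_full p i) q /\
                                   nm1 q (if i =? 0 then Empty else Full)).
  { intros i. apply Hcl. intros x. destruct i; cbn [Nat.eqb]; unfold Empty, Full; split.
    - intros [].
    - intros H. specialize (H 0). rewrite selected_empty_full in H. discriminate.
    - intros _ k. rewrite selected_empty_full. reflexivity.
    - auto. }
  destruct (functional_choice _ HEF) as [EF HEF']. exists EF. split; [|split].
  - apply Prun_select_ok. intros i. apply (HEF' i).
  - exact (proj2 (HEF' 0)).
  - exact (proj2 (HEF' 1)).
Qed.

Lemma names_rescaled_games : exists Rf : nat -> Baire,
  computes (m_rescaled_games e_resc) p (tupleB Rf) /\
  forall n, nm1 (Rf n) (rescale [true] (subgame_set xs n)).
Proof.
  assert (HR : forall n, exists q, computes e_resc (selected sel_rescale_games p n) q /\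
                                  nm1 q (rescale [true] (subgame_set xs n))).
  { intros n. destruct (Hresc [true] (projB 1 (projB n p)) (subgame_set xs n) (proj2 (Hv n)))
      as [q [Hq1 Hq2]].
    exists q. split; auto. eapply computes_in_ext; [|exact Hq1].
    intros m. rewrite selected_rescale_games. reflexivity. }
  destruct (functional_choice _ HR) as [Rf HRf]. exists Rf. split.
  - apply Prun_select_ok. intros i. apply (HRf i).
  - intros n. exact (proj2 (HRf n)).
Qed.

Lemma name_outcome2 : exists W, computes (m_outcome2 e_resc e_zo) p W /\ nm1 W (outcome2_set xs).
Proof.
  destruct names_rescaled_games as [Rf [CR HRf]].
  destruct (Hzo Rf _ HRf) as [W [HW1 HW2]].
  exists W. split; [eapply Pseq_ok; eauto|exact HW2].
Qed.

Lemma name_outcome12 : exists M, computes (m_outcome12 e_cl e_resc e_un e_zo) p M /\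
  nm1 M (outcome12_set xs).
Proof.
  destruct names_empty_full as [EF [CEF [_ HFull]]].
  destruct names_rescaled_games as [Rf [CR HRf]].
  destruct (Hresc [false] (EF 1) Full HFull) as [F0 [HF1 HF2]].
  assert (CF0 : computes (m_rescaled_full e_cl e_resc) p F0).
  { eapply Pseq_ok; [exact CEF|].
    eapply computes_ext; [apply (Prun_select_ok _ _ Pindex0 _ (fun _ => F0)); intros i|].
    - eapply computes_in_ext; [|exact HF1]. intros m. rewrite selected_rescale_full. unfold pairB.
      destruct (Nat.even m); [reflexivity|]. unfold tupleB. simpof. reflexivity.
    - intros m. apply (Pindex0_fn (fun _ => F0)). }
  pose proof (Pjoin_ok _ _ _ _ _ CF0 CR) as CT.
  set (Args := fun n : nat => let (i, j) := of_nat n in if i =? 0 then F0 j else tupleB Rf j) in CT.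
  assert (HU : forall n, exists q, computes e_un (selected sel_unions Args n) q /\
       nm1 q (fun x => rescale [false] (fun _ => True) x \/ rescale [true] (subgame_set xs n) x)).
  { intros n. destruct (Hun F0 (Rf n) _ _ HF2 (HRf n)) as [q [Hq1 Hq2]]. exists q. split; [|exact Hq2].
    eapply computes_in_ext; [|exact Hq1]. intros m. rewrite selected_unions. unfold pairB, Args. simpof.
    destruct (Nat.even m); cbn [Nat.eqb]; [reflexivity|]. unfold tupleB. simpof. reflexivity. }
  destruct (functional_choice _ HU) as [Uf HUf].
  assert (CU : computes (m_unions e_cl e_resc e_un) p (tupleB Uf)).
  { eapply Pseq_ok; [exact CT|]. apply Prun_select_ok. intros i. apply (HUf i). }
  destruct (Hzo Uf _ (fun n => proj2 (HUf n))) as [M [HM1 HM2]].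
  exists M. split; [eapply Pseq_ok; eauto|exact HM2].
Qed.

Lemma H_output_names : exists (EFs W M : Baire) (r : Baire),
  computes (reduction_H e_cl e_resc e_un e_zo) p r /\
  nm1 (fun y => EFs (to_nat (0, y))) Empty /\ nm1 (fun y => EFs (to_nat (1, y))) Full /\
  nm1 W (outcome2_set xs) /\ nm1 M (outcome12_set xs) /\
  (forall m, r m = selected Pgame_data (game_inputs p EFs W M) 0 m).
Proof.
  destruct names_empty_full as [EF [CEF [HE HF]]].
  destruct name_outcome2 as [W [CW HW]].
  destruct name_outcome12 as [M [CM HM]].
  pose proof (Pjoin_ok _ _ _ _ _ (Pcopy_ok p) (Pjoin_ok _ _ _ _ _ CEF (Pjoin_ok _ _ _ _ _ CW CM))) as CZ.
  exists (tupleB EF), W, M, (fun m => selected Pgame_data (game_inputs p (tupleB EF) W M) 0 m).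
  assert (EFi : forall i, (fun y => tupleB EF (to_nat (i, y))) = EF i).
  { intros i. apply functional_extensionality. intros y. unfold tupleB. simpof. reflexivity. }
  rewrite !EFi. repeat split; auto.
  eapply Pseq_ok; [exact CZ|].
  set (Z := game_inputs p (tupleB EF) W M).
  eapply computes_ext; [apply (Prun_select_ok _ _ Pindex0 Z (fun i => selected Pgame_data Z i));
                        intros i; apply Pcopy_ok|].
  intros m. apply (Pindex0_fn (fun i => selected Pgame_data Z i)).
Qed.
End Names.

Lemma comb_upper_sets xs a u : u < 2 ^ 3 -> upper_set (comb_game xs) a (fun o => Nat.testbit u o = true) ->
  (a = P1 /\ (u = 0 \/ u = 4 \/ u = 6 \/ u = 7)) \/ (a = P2 /\ (u = 0 \/ u = 1 \/ u = 3 \/ u = 7)).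
Proof.
  intros Hu [_ Hc]. cbn in Hu.
  destruct a; do 8 (destruct u as [|u]; [ first [ tauto | exfalso;
      first [ discriminate (Hc 0 1 eq_refl ltac:(cbn; lia) eq_refl)
            | discriminate (Hc 0 2 eq_refl ltac:(cbn; lia) eq_refl)
            | discriminate (Hc 1 2 eq_refl ltac:(cbn; lia) eq_refl)
            | discriminate (Hc 1 0 eq_refl ltac:(cbn; lia) eq_refl)
            | discriminate (Hc 2 0 eq_refl ltac:(cbn; lia) eq_refl)
            | discriminate (Hc 2 1 eq_refl ltac:(cbn; lia) eq_refl) ] ] |]); lia.
Qed.

Lemma pred_eq (A B : Cantor -> Prop) : (forall x, A x <-> B x) -> A = B.
Proof. intros H. apply functional_extensionality. intros x. apply propositional_extensionality. auto. Qed.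

Section GameName.
Variable nm1 : pcrep.
Variable p : Baire.
Variable xs : nat -> (list bool -> player) * (Cantor -> Prop).
Hypothesis Hv : hat_rep (win_rep nm1) p xs.
Variables EFs W M r : Baire.
Hypothesis HE : nm1 (fun y => EFs (to_nat (0, y))) Empty.
Hypothesis HF : nm1 (fun y => EFs (to_nat (1, y))) Full.
Hypothesis HW : nm1 W (outcome2_set xs).
Hypothesis HM : nm1 M (outcome12_set xs).
Let Z := game_inputs p EFs W M.
Hypothesis Hr : forall m, r m = selected Pgame_data Z 0 m.

Lemma game_rep_name t : projB t (projB 3 r) 0 = tab t complement_tag_table 0 /\
  (fun y => projB t (projB 3 r) (S y)) =
  (fun y => let s := tab t name_source_table 0 in
            Z (to_nat (1, to_nat (Nat.div2 s, to_nat (if Nat.even s then 0 else 1, y))))).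
Proof.
  split.
  - unfold projB. rewrite Hr, selected_game_data. apply game_data_name_tag.
  - apply functional_extensionality. intros y. unfold projB. rewrite Hr, selected_game_data.
    apply game_data_name_body.
Qed.

Lemma inputs_empty : (fun y => Z (to_nat (1, to_nat (0, to_nat (0, y))))) = (fun y => EFs (to_nat (0, y))).
Proof. apply functional_extensionality; intros y. unfold Z, game_inputs. simpof. reflexivity. Qed.
Lemma inputs_full : (fun y => Z (to_nat (1, to_nat (0, to_nat (1, y))))) = (fun y => EFs (to_nat (1, y))).
Proof. apply functional_extensionality; intros y. unfold Z, game_inputs. simpof. reflexivity. Qed.
Lemma inputs_outcome2 : (fun y => Z (to_nat (1, to_nat (1, to_nat (0, y))))) = W.
Proof. apply functional_extensionality; intros y. unfold Z, game_inputs. simpof. reflexivity. Qed.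
Lemma inputs_outcome12 : (fun y => Z (to_nat (1, to_nat (1, to_nat (1, y))))) = M.
Proof. apply functional_extensionality; intros y. unfold Z, game_inputs. simpof. reflexivity. Qed.

Ltac val_cases x :=
  pose proof (comb_val_lt xs x); destruct (comb_val xs x) as [|[|[|?]]] eqn:?; try lia; cbn.

Lemma val_bits_0 : (fun x => Nat.testbit 0 (g_val (comb_game xs) x) = true) = Empty.
Proof.
  apply pred_eq. intros x. cbn [comb_game g_val]. unfold Empty. rewrite Nat.bits_0.
  split; [discriminate|intros []].
Qed.
Lemma val_bits_7 : (fun x => Nat.testbit 7 (g_val (comb_game xs) x) = true) = Full.
Proof. apply pred_eq. intros x. cbn [comb_game g_val]. unfold Full. val_cases x; tauto. Qed.
Lemma val_bits_4 : (fun x => Nat.testbit 4 (g_val (comb_game xs) x) = true) = outcome2_set xs.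
Proof. apply pred_eq. intros x. cbn [comb_game g_val]. rewrite <- comb_val_2. val_cases x; split; congruence. Qed.
Lemma val_bits_6 : (fun x => Nat.testbit 6 (g_val (comb_game xs) x) = true) = outcome12_set xs.
Proof.
  apply pred_eq. intros x. cbn [comb_game g_val]. rewrite <- comb_val_ge1.
  val_cases x; split; intros; try congruence; lia.
Qed.
Lemma val_bits_1 x : Nat.testbit 1 (g_val (comb_game xs) x) = true <-> ~ outcome12_set xs x.
Proof. cbn [comb_game g_val]. rewrite <- comb_val_ge1. val_cases x; split; intros; try congruence; lia. Qed.
Lemma val_bits_3 x : Nat.testbit 3 (g_val (comb_game xs) x) = true <-> ~ outcome2_set xs x.
Proof. cbn [comb_game g_val]. rewrite <- comb_val_2. val_cases x; split; intros; try congruence; lia. Qed.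

Lemma game_rep_upper_sets a u : u < 2 ^ g_nout (comb_game xs) ->
  upper_set (comb_game xs) a (fun o => Nat.testbit u o = true) ->
  compl_closure nm1 (projB (to_nat (player_code a, u)) (projB 3 r))
    (fun x => Nat.testbit u (g_val (comb_game xs) x) = true).
Proof.
  intros Hu Hup. destruct (game_rep_name (to_nat (player_code a, u))) as [N0 NS].
  unfold compl_closure, Defs.tl. cbv beta. rewrite N0, NS.
  destruct (comb_upper_sets xs a u Hu Hup) as [[-> Hu']|[-> Hu']];
    destruct Hu' as [ -> | [ -> | [ -> | -> ]]]; cbn [player_code];
    (let s := fresh in
     match goal with |- context [tab ?t name_source_table 0] =>
       set (s := tab t name_source_table 0); vm_compute in s; subst s end);
    match goal with |- context [tab ?t complement_tag_table 0] =>
       let b := fresh in set (b := tab t complement_tag_table 0); vm_compute in b; subst b end;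
    cbn [Nat.div2 Nat.even];
    rewrite ?inputs_empty, ?inputs_full, ?inputs_outcome2, ?inputs_outcome12,
            ?val_bits_0, ?val_bits_7, ?val_bits_4, ?val_bits_6.
  all: try (left; split; [reflexivity|assumption]).
  - right; split; [reflexivity|]. exists (outcome12_set xs). split; [assumption|]. apply val_bits_1.
  - right; split; [reflexivity|]. exists (outcome2_set xs). split; [assumption|]. apply val_bits_3.
Qed.

Lemma game_rep_ok : game_rep (compl_closure nm1) r (comb_game xs).
Proof.
  unfold game_rep. split; [|split; [|split; [|split]]].
  - unfold projB. rewrite Hr, selected_game_data, game_data_header. reflexivity.
  - unfold projB. rewrite Hr, selected_game_data, game_data_header. reflexivity.
  - intros w. unfold projB. rewrite Hr, selected_game_data. cbn [comb_game g_turn]. apply game_data_turn.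
    intros n w'. unfold Z, game_inputs, subgame_turn. simpof. cbn [Nat.eqb].
    destruct (Hv n) as [H1 _]. rewrite <- H1. reflexivity.
  - intros a o o' _ _. unfold projB. rewrite Hr, selected_game_data, game_data_pref.
    cbn [comb_game g_pref lt_pref].
    destruct a; cbn [player_code Nat.eqb lt_pref]; [destruct (o <? o')|destruct (o' <? o)]; reflexivity.
  - apply game_rep_upper_sets.
Qed.
End GameName.

Definition machine_fn (e : prf) (p : Baire) : option Baire :=
  match excluded_middle_informative (exists q, computes e p q) with
  | left ex => Some (proj1_sig (constructive_indefinite_description _ ex))
  | right _ => None
  end.

Lemma machine_fn_computable e : computable (machine_fn e).
Proof.
  exists e. intros p q. unfold machine_fn. destruct (excluded_middle_informative _) as [ex|]; [|discriminate].
  intros H. injection H as <-. apply proj2_sig.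
Qed.

Lemma machine_fn_eq e p q : computes e p q -> machine_fn e p = Some q.
Proof.
  intros Hc. unfold machine_fn. destruct (excluded_middle_informative _) as [ex|n]; [|exfalso; apply n; eauto].
  f_equal. apply functional_extensionality. intros n. apply (computes_deterministic e p); auto.
  apply proj2_sig.
Qed.

Lemma subgames_determined nm1 p xs
  (Hdet1 : forall d A p, nm1 p A -> has_win d A P1 \/ has_win d A P2)
  (Hunr : exists e, forall w p A, nm1 p A ->
     exists q, computes e (pairB (cst (wcode w)) p) q /\ nm1 q (unrescale w A))
  (Hv : hat_rep (win_rep nm1) p xs) :
  forall z u, wins_at (subgame_turn xs z) (subgame_set xs z) P1 u \/
              wins_at (subgame_turn xs z) (subgame_set xs z) P2 u.
Proof.
  intros z u. destruct Hunr as [e_unr Hunr].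
  destruct (Hunr u (projB 1 (projB z p)) (subgame_set xs z) (proj2 (Hv z))) as [q [_ Hq]].
  exact (Hdet1 (fun v => subgame_turn xs z (u ++ v)) _ q Hq).
Qed.

Theorem lemma28 (nm1 : pcrep)
  (Hfun : rep_functional nm1)
  (Hst1 : standing nm1)
  (Hclosed : contains_closed nm1)
  (Hunion : closed_union nm1)
  (Hop : closed_zero_op nm1)
  (Hst : standing (compl_closure nm1)) :
  Wred (hat_rep (win_rep nm1)) (hat_rep pl_rep) (hat Win)
       (game_rep (compl_closure nm1)) strat_rep SPE.
Proof.
  destruct Hst1 as [Hdet1 [_ [_ [[e_resc Hresc] [Hunr _]]]]].
  destruct Hclosed as [e_cl Hcl]. destruct Hunion as [e_un Hun]. destruct Hop as [e_zo Hzo].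
  exists (machine_fn reduction_K), (machine_fn (reduction_H e_cl e_resc e_un e_zo)).
  split; [apply machine_fn_computable|]. split; [apply machine_fn_computable|].
  intros Gr HG p xs Hv _.
  destruct (H_output_names nm1 e_cl e_resc e_un e_zo Hcl Hresc Hun Hzo p xs Hv)
    as [EFs [W [M [r [Cr [HE [HF [HW [HM Hr]]]]]]]]].
  pose proof (game_rep_ok nm1 p xs Hv EFs W M r HE HF HW HM Hr) as Grep.
  destruct (SPE_exists xs (subgames_determined nm1 p xs Hdet1 Hunr Hv)) as [s0 Hs0].
  destruct (HG r (comb_game xs) Grep (ex_intro _ s0 (conj (comb_game_antag_linear xs) Hs0)))
    as [q [Hq [y [Hy [_ Hys]]]]].
  unfold wcomp. rewrite (machine_fn_eq _ _ _ Cr), Hq, (machine_fn_eq _ _ _ (reduction_K_ok p q)).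
  eexists; split; [reflexivity|].
  exists (fun i => if y (choice_node i) then P1 else P2). split.
  - intros i. unfold pl_rep, projB. simpof. rewrite Hy. destruct (y (choice_node i)); reflexivity.
  - intros i. unfold Win. destruct (Hdet1 (fst (xs i)) (snd (xs i)) _ (proj2 (Hv i))) as [W1|W2].
    + rewrite (spe_enters_if_P1_wins xs y Hys i W1). exact W1.
    + rewrite (spe_declines_if_P2_wins xs y Hys i W2). exact W2.
Qed.
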